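(* Let $\mathcal{G}=\langle\mathcal{Q},\mathbf{f}\rangle$ be a monotone NEP satisfying also Assumption 2, with nonempty set of Nash equilibria. Let $\tau>0$ be such that, for every $\mathbf{y}\in\mathbb{R}^n$, the matrix $\boldsymbol{\Upsilon}_{\mathbf{F}_{\tau,\mathbf{y}}}$ is a P-matrix. Then for every $\mathbf{y}$ the game $\mathcal{G}_{\tau,\mathbf{y}}$ has a unique NE $\mathbf{S}_\tau(\mathbf{y})$, and for every $\mathbf{x}^{(0)}\in\mathcal{Q}$ the sequence $\mathbf{x}^{(n+1)}=\mathbf{S}_\tau(\mathbf{x}^{(n)})$ converges to a NE of $\mathcal{G}$.
   Context: Real NEP: player $i$ chooses $\mathbf{x}_i\in\mathcal{Q}_i\subseteq\mathbb{R}^{n_i}$ minimizing $f_i(\mathbf{x}_i,\mathbf{x}_{-i})$; $\mathcal{Q}=\prod_i\mathcal{Q}_i$, $n=\sum n_i$. NE: $\mathbf{x}^\star\in\mathcal{Q}$ with $f_i(\mathbf{x}^\star_i,\mathbf{x}^\star_{-i})\le f_i(\mathbf{x}_i,\mathbf{x}^\star_{-i})$ for all $\mathbf{x}_i\in\mathcal{Q}_i$, all $i$. Assumption 1: $\mathcal{Q}_i$ nonempty closed convex, $f_i$ continuously differentiable on $\mathcal{Q}$, convex in $\mathbf{x}_i$. Assumption 2: $f_i$ twice continuously differentiable with bounded derivatives on $\mathcal{Q}$. Monotone NEP: Assumption 1 holds and $\mathbf{F}(\mathbf{x})=(\nabla_{\mathbf{x}_i}f_i(\mathbf{x}))_i$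 is monotone on $\mathcal{Q}$. $\mathcal{G}_{\tau,\mathbf{y}}$: the game in which player $i$ minimizes $f_i(\mathbf{x}_i,\mathbf{x}_{-i})+\frac\tau2\|\mathbf{x}_i-\mathbf{y}_i\|^2$ over $\mathcal{Q}_i$; its gradient map is $\mathbf{F}_{\tau,\mathbf{y}}(\mathbf{x})=\mathbf{F}(\mathbf{x})+\tau(\mathbf{x}-\mathbf{y})$. For a partitioned map $\mathbf{G}=(\mathbf{G}_i)_i$, $\boldsymbol{\Upsilon}_{\mathbf{G}}$ is the $I\times I$ matrix with diagonal $\inf_{\mathbf{x}\in\mathcal{Q}}\lambda_{\rm least}(\mathbf{J}_i\mathbf{G}_i(\mathbf{x}))$ and off-diagonal entries $-\sup_{\mathbf{x}\in\mathcal{Q}}\|\mathbf{J}_j\mathbf{G}_i(\mathbf{x})\|_2$, with $\mathbf{J}_j$ the Jacobian w.r.t. $\mathbf{x}_j$ and $\lambda_{\rm least}(\mathbf{A})$ the smallest eigenvalue of $(\mathbf{A}+\mathbf{A}^T)/2$. P-matrix: all principal minors positive. *)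

From Stdlib Require Import Reals Lra Lia Classical ClassicalEpsilon Sorting.Sorted List.
Open Scope R_scope.

(* ---------- Finite-dimensional vectors ----------
   A vector of R^d is represented by a function v : nat -> R which vanishes
   at all indices >= d (predicate [supp d v]). *)

Definition vec := nat -> R.

Definition supp (d : nat) (v : vec) : Prop := forall k, (d <= k)%nat -> v k = 0.

Fixpoint rsum (d : nat) (g : nat -> R) : R :=
  match d with O => 0 | S d' => rsum d' g + g d' end.

Definition vnorm (d : nat) (v : vec) : R := sqrt (rsum d (fun k => v k ^ 2)).

Definition vsub (u v : vec) : vec := fun k => u k - v k.

Definition shift (x : vec) (k : nat) (t : R) : vec :=
  fun m => if Nat.eqb m k then x m + t else x m.

Definition has_pd (h : vec -> R) (x : vec) (k : nat) (l : R) : Prop :=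
  derivable_pt_lim (fun t => h (shift x k t)) 0 l.

Definition ex_pd (h : vec -> R) (x : vec) (k : nat) : Prop := exists l, has_pd h x k l.

(* the partial derivative d h / d x_k at x (meaningful when it exists) *)
Definition pd (h : vec -> R) (x : vec) (k : nat) : R :=
  epsilon (inhabits 0) (fun l => has_pd h x k l).

Definition open_in (n : nat) (U : vec -> Prop) : Prop :=
  forall x, U x -> exists del, 0 < del /\
    forall z, supp n z -> vnorm n (vsub z x) < del -> U z.

Definition cont_on (n : nat) (U : vec -> Prop) (h : vec -> R) : Prop :=
  forall x, U x -> forall eps, 0 < eps -> exists del, 0 < del /\
    forall z, supp n z -> U z -> vnorm n (vsub z x) < del -> Rabs (h z - h x) < eps.

Definition C2_on (n : nat) (U : vec -> Prop) (h : vec -> R) : Prop :=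
  cont_on n U h /\
  (forall k, (k < n)%nat ->
     (forall x, U x -> ex_pd h x k) /\ cont_on n U (fun z => pd h z k)) /\
  (forall k l, (k < n)%nat -> (l < n)%nat ->
     (forall x, U x -> ex_pd (fun z => pd h z k) x l) /\
     cont_on n U (fun z => pd (fun w => pd h w k) z l)).

Definition nonemptyQ (d : nat) (P : vec -> Prop) : Prop := exists v, supp d v /\ P v.

Definition closedQ (d : nat) (P : vec -> Prop) : Prop :=
  forall v, supp d v -> ~ P v -> exists del, 0 < del /\
    forall w, supp d w -> vnorm d (vsub w v) < del -> ~ P w.

Definition convexQ (d : nat) (P : vec -> Prop) : Prop :=
  forall u v t, supp d u -> supp d v -> P u -> P v -> 0 <= t <= 1 ->
    P (fun k => t * u k + (1 - t) * v k).

(* ---------- Games ----------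
   I players; player i has n_i = ni i variables; the full vector x in R^n,
   n = sum_i n_i, stores block i at indices off ni i, ..., off ni i + ni i - 1. *)

Fixpoint off (ni : nat -> nat) (i : nat) : nat :=
  match i with O => O | S i' => (off ni i' + ni i')%nat end.

Definition ntot (I : nat) (ni : nat -> nat) : nat := off ni I.

Definition blk (ni : nat -> nat) (x : vec) (i : nat) : vec :=
  fun r => if Nat.ltb r (ni i) then x (off ni i + r)%nat else 0.

(* (v, x_{-i}) : replace block i of x by v *)
Definition upd (ni : nat -> nat) (x : vec) (i : nat) (v : vec) : vec :=
  fun k => if andb (Nat.leb (off ni i) k) (Nat.ltb k (off ni i + ni i)) then v (k - off ni i)%nat
           else x k.

Definition inQ (I : nat) (ni : nat -> nat) (Qi : nat -> vec -> Prop) (x : vec) : Prop :=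
  supp (ntot I ni) x /\ forall i, (i < I)%nat -> Qi i (blk ni x i).

Definition is_NE (I : nat) (ni : nat -> nat) (Qi : nat -> vec -> Prop)
  (f : nat -> vec -> R) (x : vec) : Prop :=
  inQ I ni Qi x /\
  forall i, (i < I)%nat -> forall v, supp (ni i) v -> Qi i v ->
    f i x <= f i (upd ni x i v).

Definition fprox (ni : nat -> nat) (f : nat -> vec -> R) (tau : R) (y : vec)
  (i : nat) (x : vec) : R :=
  f i x + tau / 2 * rsum (ni i) (fun r => (x (off ni i + r)%nat - y (off ni i + r)%nat) ^ 2).

(* partitioned maps G = (G_i)_i : G i x r is the r-th component of G_i(x) *)
Definition pmap := nat -> vec -> nat -> R.

Definition Fgrad (ni : nat -> nat) (f : nat -> vec -> R) : pmap :=
  fun i x r => pd (f i) x (off ni i + r)%nat.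

Definition Ftau (ni : nat -> nat) (F : pmap) (tau : R) (y : vec) : pmap :=
  fun i x r => F i x r + tau * (x (off ni i + r)%nat - y (off ni i + r)%nat).

Definition monotone_on (I : nat) (ni : nat -> nat) (Qi : nat -> vec -> Prop) (F : pmap) : Prop :=
  forall x z, inQ I ni Qi x -> inQ I ni Qi z ->
    0 <= rsum I (fun i => rsum (ni i) (fun r =>
           (F i x r - F i z r) * (x (off ni i + r)%nat - z (off ni i + r)%nat))).

Definition mat := nat -> nat -> R.

Definition Jac (ni : nat -> nat) (G : pmap) (i j : nat) (x : vec) : mat :=
  fun r c => pd (fun z => G i z r) x (off ni j + c)%nat.

Definition symm (A : mat) : mat := fun r c => (A r c + A c r) / 2.

Definition matvec (d : nat) (A : mat) (v : vec) : vec := fun r => rsum d (fun c => A r c * v c).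

Definition is_eig (d : nat) (S : mat) (l : R) : Prop :=
  exists v, supp d v /\ (exists k, (k < d)%nat /\ v k <> 0) /\
    forall r, (r < d)%nat -> matvec d S v r = l * v r.

Definition lambda_least (d : nat) (A : mat) (t : R) : Prop :=
  is_eig d (symm A) t /\ forall mu, is_eig d (symm A) mu -> t <= mu.

Definition is_inf (E : R -> Prop) (m : R) : Prop :=
  (forall t, E t -> m <= t) /\ (forall b, (forall t, E t -> b <= t) -> b <= m).

Definition opnorm2 (m d : nat) (A : mat) (t : R) : Prop :=
  is_lub (fun s => exists v, supp d v /\ vnorm d v = 1 /\ s = vnorm m (matvec d A v)) t.

Definition is_Upsilon (I : nat) (ni : nat -> nat) (Qi : nat -> vec -> Prop) (G : pmap)
  (M : mat) : Prop :=
  (forall i, (i < I)%nat ->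
     is_inf (fun t => exists x, inQ I ni Qi x /\ lambda_least (ni i) (Jac ni G i i x) t) (M i i)) /\
  (forall i j, (i < I)%nat -> (j < I)%nat -> i <> j ->
     is_lub (fun t => exists x, inQ I ni Qi x /\ opnorm2 (ni i) (ni j) (Jac ni G i j x) t)
            (- M i j)).

Definition minor0 (A : mat) (c : nat) : mat :=
  fun r s => A (S r) (if Nat.ltb s c then s else S s).

Fixpoint det (d : nat) (A : mat) : R :=
  match d with
  | O => 1
  | S d' => rsum d (fun c => (-1) ^ c * A 0%nat c * det d' (minor0 A c))
  end.

Definition subm (A : mat) (l : list nat) : mat :=
  fun r s => A (List.nth r l 0%nat) (List.nth s l 0%nat).

Definition P_matrix (I : nat) (M : mat) : Prop :=
  forall l : list nat, l <> nil -> Sorted.StronglySorted lt l ->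
    (forall k, List.In k l -> (k < I)%nat) ->
    0 < det (length l) (subm M l).

Definition converges_to (n : nat) (xs : nat -> vec) (xl : vec) : Prop :=
  forall eps, 0 < eps -> exists N, forall m, (N <= m)%nat -> vnorm n (vsub (xs m) xl) < eps.

(* Since F is monotone on Q and tau > 0, the gradient map
   F_{tau,y} = F + tau (. - y) of the regularized game G_{tau,y} is
   tau-strongly monotone; this alone yields uniqueness of its equilibrium.

   1. Nash equilibria of G_{tau,y} (tau >= 0) are exactly the solutions of the
      variational inequality VI(Q, F_{tau,y}): necessity by differentiating each
      player's cost along feasible deviations, sufficiency by convexity of f_i
      in x_i (lemmas NE_VI, VI_NE).
   2. Bounded second derivatives make F Lipschitz on Q; together with strong
      monotonicity, the projected gradient map is a contraction of Q, whose
      fixed point (Banach) solves the VI; strong monotonicity gives uniqueness.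
   3. Each proximal step is Fejer monotone with respect to every solution of
      VI(Q, F); the iterates are therefore bounded, have a cluster point
      (Bolzano-Weierstrass), consecutive steps vanish, the cluster point solves
      VI(Q, F), and Fejer monotonicity upgrades subsequential convergence to
      convergence of the whole sequence. *)

From Stdlib Require Import Reals Lra Lia Classical ClassicalEpsilon FunctionalExtensionality.
Open Scope R_scope.

Lemma rsum_ext d g h : (forall k, (k < d)%nat -> g k = h k) -> rsum d g = rsum d h.
Proof.
  induction d as [|d IH]; simpl; intros H; auto.
  rewrite IH by (intros; apply H; lia). rewrite H by lia. reflexivity.
Qed.

Lemma rsum_plus d g h : rsum d (fun k => g k + h k) = rsum d g + rsum d h.
Proof. induction d; simpl; [lra|]. rewrite IHd; lra. Qed.

Lemma rsum_scal d c g : rsum d (fun k => c * g k) = c * rsum d g.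
Proof. induction d; simpl; [lra|]. rewrite IHd; lra. Qed.

Lemma rsum_opp d g : rsum d (fun k => - g k) = - rsum d g.
Proof. induction d; simpl; [lra|]. rewrite IHd; lra. Qed.

Lemma rsum_minus d g h : rsum d (fun k => g k - h k) = rsum d g - rsum d h.
Proof. induction d; simpl; [lra|]. rewrite IHd; lra. Qed.

Lemma rsum_const d c : rsum d (fun _ => c) = INR d * c.
Proof. induction d; cbn [rsum]; [simpl; lra|]. rewrite IHd, S_INR. lra. Qed.

Lemma rsum_zero d g : (forall k, (k < d)%nat -> g k = 0) -> rsum d g = 0.
Proof.
  intros H. rewrite (rsum_ext d g (fun _ => 0)) by exact H.
  rewrite rsum_const; ring.
Qed.

Lemma rsum_le d g h : (forall k, (k < d)%nat -> g k <= h k) -> rsum d g <= rsum d h.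
Proof.
  induction d as [|d IH]; simpl; intros H; [lra|].
  assert (g d <= h d) by (apply H; lia).
  assert (rsum d g <= rsum d h) by (apply IH; intros; apply H; lia).
  lra.
Qed.

Lemma rsum_nonneg d g : (forall k, (k < d)%nat -> 0 <= g k) -> 0 <= rsum d g.
Proof.
  intros H. replace 0 with (rsum d (fun _ => 0)) by (apply rsum_zero; auto).
  apply rsum_le; auto.
Qed.

Lemma rsum_term_le d g k :
  (forall k, (k < d)%nat -> 0 <= g k) -> (k < d)%nat -> g k <= rsum d g.
Proof.
  induction d as [|d IH]; simpl; intros H Hk; [lia|].
  assert (0 <= rsum d g) by (apply rsum_nonneg; intros; apply H; lia).
  assert (0 <= g d) by (apply H; lia).
  destruct (Nat.eq_dec k d) as [->|Hkd]; [lra|].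
  assert (g k <= rsum d g) by (apply IH; [intros; apply H|]; lia).
  lra.
Qed.

Lemma rsum_add a b g : rsum (a + b) g = rsum a g + rsum b (fun r => g (a + r)%nat).
Proof.
  induction b; simpl; [rewrite Nat.add_0_r; lra|].
  rewrite Nat.add_succ_r; simpl. rewrite IHb; lra.
Qed.

Lemma rsum_single d g i :
  (i < d)%nat -> (forall j, (j < d)%nat -> j <> i -> g j = 0) -> rsum d g = g i.
Proof.
  induction d as [|d IH]; simpl; intros Hi H; [lia|].
  destruct (Nat.eq_dec i d) as [->|Hid].
  - rewrite rsum_zero by (intros; apply H; lia). lra.
  - rewrite IH by (try lia; intros; apply H; lia). rewrite (H d) by lia. lra.
Qed.

Lemma rsum_abs d g : Rabs (rsum d g) <= rsum d (fun k => Rabs (g k)).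
Proof.
  induction d; simpl; [rewrite Rabs_R0; lra|].
  eapply Rle_trans; [apply Rabs_triang|]. lra.
Qed.

Lemma rsum_sq_le d g : (rsum d g) ^ 2 <= INR d * rsum d (fun k => g k ^ 2).
Proof.
  induction d as [|d IH]; cbn [rsum]; [simpl; lra|].
  assert (Hcross : 2 * rsum d g * g d <= rsum d (fun k => g k ^ 2) + INR d * g d ^ 2).
  { rewrite <- rsum_const, <- rsum_plus.
    replace (2 * rsum d g * g d) with (rsum d (fun k => 2 * g d * g k))
      by (rewrite rsum_scal; ring).
    apply rsum_le; intros k _. pose proof (pow2_ge_0 (g k - g d)). nra. }
  rewrite S_INR. nra.
Qed.

Lemma rsum_quad d a b t : rsum d (fun k => (a k - t * b k) ^ 2) =
  rsum d (fun k => a k ^ 2) - 2 * t * rsum d (fun k => a k * b k)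
  + t ^ 2 * rsum d (fun k => b k ^ 2).
Proof. rewrite <- !rsum_scal, <- rsum_minus, <- rsum_plus. apply rsum_ext; intros; ring. Qed.

Lemma telescope n (g : nat -> R) : g n - g 0%nat = rsum n (fun j => g (S j) - g j).
Proof. induction n; simpl; [ring|]. rewrite <- IHn; ring. Qed.

Definition nsq (d : nat) (v : vec) : R := rsum d (fun k => v k ^ 2).
Definition ip (d : nat) (u v : vec) : R := rsum d (fun k => u k * v k).

Lemma nsq_nonneg d v : 0 <= nsq d v.
Proof. apply rsum_nonneg; intros; apply pow2_ge_0. Qed.

Lemma sqrt_sq_pow x : 0 <= x -> sqrt x ^ 2 = x.
Proof. intros; rewrite <- Rsqr_pow2, Rsqr_sqrt; auto. Qed.

Lemma abs_le_of_sq a b : 0 <= b -> a ^ 2 <= b ^ 2 -> Rabs a <= b.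
Proof. intros. unfold Rabs; destruct (Rcase_abs a); nra. Qed.

Lemma abs_lt_of_sq a b : 0 < b -> a ^ 2 < b ^ 2 -> Rabs a < b.
Proof. intros. unfold Rabs; destruct (Rcase_abs a); nra. Qed.

Lemma vnorm_lt_iff d v del : 0 < del -> (vnorm d v < del <-> nsq d v < del ^ 2).
Proof.
  intros Hd. unfold vnorm. fold (nsq d v). pose proof (nsq_nonneg d v). split; intros H'.
  - pose proof (sqrt_pos (nsq d v)). rewrite <- (sqrt_sq_pow (nsq d v)) by lra. nra.
  - rewrite <- (sqrt_pow2 del) by lra. apply sqrt_lt_1_alt. lra.
Qed.

Lemma coord_le_nsq d v k : (k < d)%nat -> v k ^ 2 <= nsq d v.
Proof. intros; apply (rsum_term_le d (fun k => v k ^ 2)); auto; intros; apply pow2_ge_0. Qed.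

Lemma coord_abs_le n v k : (k < n)%nat -> Rabs (v k) <= vnorm n v.
Proof.
  intros Hk. apply abs_le_of_sq; [apply sqrt_pos|].
  unfold vnorm; fold (nsq n v). rewrite sqrt_sq_pow by apply nsq_nonneg.
  apply coord_le_nsq; auto.
Qed.

Lemma off_mono ni j i : (j < i)%nat -> (off ni j + ni j <= off ni i)%nat.
Proof.
  induction i as [|i IH]; intros H; [lia|]. simpl.
  destruct (Nat.eq_dec j i) as [->|Hji]; [lia|]. specialize (IH ltac:(lia)); lia.
Qed.

Lemma off_ntot I ni i : (i < I)%nat -> (off ni i + ni i <= ntot I ni)%nat.
Proof. intros; apply off_mono; auto. Qed.

Lemma rsum_blocks I ni g :
  rsum (ntot I ni) g = rsum I (fun i => rsum (ni i) (fun r => g (off ni i + r)%nat)).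
Proof. induction I; simpl; auto. unfold ntot in *; simpl. rewrite rsum_add, IHI; auto. Qed.

Lemma rsum_blockonly I ni i g : (i < I)%nat ->
  (forall j r, (j < I)%nat -> j <> i -> (r < ni j)%nat -> g (off ni j + r)%nat = 0) ->
  rsum (ntot I ni) g = rsum (ni i) (fun r => g (off ni i + r)%nat).
Proof.
  intros Hi H. rewrite rsum_blocks, (rsum_single I _ i Hi); auto.
  intros j Hj Hji. apply rsum_zero; intros r Hr; apply H; auto.
Qed.

Lemma blk_eq ni x i r : (r < ni i)%nat -> blk ni x i r = x (off ni i + r)%nat.
Proof. intros H; unfold blk. destruct (Nat.ltb_spec r (ni i)); auto; lia. Qed.

Lemma blk_supp ni x i : supp (ni i) (blk ni x i).
Proof. intros k Hk; unfold blk; destruct (Nat.ltb_spec k (ni i)); auto; lia. Qed.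

Lemma upd_in ni x i v r : (r < ni i)%nat -> upd ni x i v (off ni i + r)%nat = v r.
Proof.
  intros H; unfold upd.
  destruct (Nat.leb_spec (off ni i) (off ni i + r));
    destruct (Nat.ltb_spec (off ni i + r) (off ni i + ni i)); simpl; try lia.
  f_equal; lia.
Qed.

Lemma upd_out ni x i v k :
  ((k < off ni i) \/ (off ni i + ni i <= k))%nat -> upd ni x i v k = x k.
Proof.
  intros H; unfold upd.
  destruct (Nat.leb_spec (off ni i) k); destruct (Nat.ltb_spec k (off ni i + ni i));
    simpl; auto; lia.
Qed.

Lemma upd_other ni x i v j r :
  j <> i -> (r < ni j)%nat -> upd ni x i v (off ni j + r)%nat = x (off ni j + r)%nat.
Proof.
  intros H Hr. apply upd_out. destruct (Nat.lt_ge_cases j i) as [Hlt|Hge].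
  - pose proof (off_mono ni j i Hlt); lia.
  - pose proof (off_mono ni i j ltac:(lia)); lia.
Qed.

Lemma upd_blk ni x i : upd ni x i (blk ni x i) = x.
Proof.
  extensionality k. unfold upd, blk.
  destruct (Nat.leb_spec (off ni i) k); destruct (Nat.ltb_spec k (off ni i + ni i)); simpl; auto.
  destruct (Nat.ltb_spec (k - off ni i) (ni i)); try lia. f_equal; lia.
Qed.

Definition inb (ni : nat -> nat) (i k : nat) : bool :=
  andb (Nat.leb (off ni i) k) (Nat.ltb k (off ni i + ni i)).

Lemma inb_true ni i r : (r < ni i)%nat -> inb ni i (off ni i + r) = true.
Proof.
  intros; unfold inb.
  destruct (Nat.leb_spec (off ni i) (off ni i + r));
    destruct (Nat.ltb_spec (off ni i + r) (off ni i + ni i)); simpl; auto; lia.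
Qed.

Lemma inb_false ni i j r : j <> i -> (r < ni j)%nat -> inb ni i (off ni j + r) = false.
Proof.
  intros H Hr. unfold inb. destruct (Nat.lt_ge_cases j i) as [Hlt|Hge].
  - pose proof (off_mono ni j i Hlt).
    destruct (Nat.leb_spec (off ni i) (off ni j + r)); simpl; auto; lia.
  - pose proof (off_mono ni i j ltac:(lia)).
    destruct (Nat.leb_spec (off ni i) (off ni j + r));
      destruct (Nat.ltb_spec (off ni j + r) (off ni i + ni i)); simpl; auto; lia.
Qed.

(* The vector of R^n whose block i is w i (assembly of a partitioned map's values). *)
Definition asm (I : nat) (ni : nat -> nat) (w : nat -> nat -> R) : vec :=
  fun k => rsum I (fun i => if inb ni i k then w i (k - off ni i)%nat else 0).

Lemma asm_at I ni w i r :
  (i < I)%nat -> (r < ni i)%nat -> asm I ni w (off ni i + r)%nat = w i r.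
Proof.
  intros Hi Hr. unfold asm. rewrite (rsum_single I _ i Hi).
  - rewrite inb_true by auto. f_equal; lia.
  - intros j Hj Hji. rewrite inb_false; auto.
Qed.

Lemma inQ_upd I ni Qi x i v : (i < I)%nat ->
  inQ I ni Qi x -> supp (ni i) v -> Qi i v -> inQ I ni Qi (upd ni x i v).
Proof.
  intros Hi [Hs Hb] Hv Qv. split.
  - intros k Hk. pose proof (off_ntot I ni i Hi). rewrite upd_out by lia. auto.
  - intros j Hj. destruct (Nat.eq_dec j i) as [->|Hji].
    + replace (blk ni (upd ni x i v) i) with v; auto. extensionality r. unfold blk.
      destruct (Nat.ltb_spec r (ni i)); [rewrite upd_in|rewrite Hv]; auto.
    + replace (blk ni (upd ni x i v) j) with (blk ni x j); auto. extensionality r. unfold blk.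
      destruct (Nat.ltb_spec r (ni j)); auto. rewrite upd_other; auto.
Qed.

Definition comb (t : R) (u v : vec) : vec := fun k => t * u k + (1 - t) * v k.

Lemma inQ_comb I ni Qi u v t : (forall i, (i < I)%nat -> convexQ (ni i) (Qi i)) ->
  inQ I ni Qi u -> inQ I ni Qi v -> 0 <= t <= 1 -> inQ I ni Qi (comb t u v).
Proof.
  intros Hcv [Hu Qu] [Hv Qv] Ht. split.
  - intros k Hk; unfold comb; rewrite Hu, Hv by auto; ring.
  - intros i Hi.
    replace (blk ni (comb t u v) i)
      with (fun k => t * blk ni u i k + (1 - t) * blk ni v i k).
    + apply Hcv; auto using blk_supp.
    + extensionality k. unfold blk, comb. destruct (Nat.ltb_spec k (ni i)); auto; ring.
Qed.

Definition cvc (n : nat) (xs : nat -> vec) (x : vec) : Prop :=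
  forall k, (k < n)%nat -> Un_cv (fun m => xs m k) (x k).

Lemma cv_const c : Un_cv (fun _ => c) c.
Proof. intros eps He; exists 0%nat; intros; unfold Rdist; rewrite Rminus_diag, Rabs_R0; lra. Qed.

Lemma cv_rsum d (s : nat -> nat -> R) (l : nat -> R) :
  (forall k, (k < d)%nat -> Un_cv (fun m => s m k) (l k)) ->
  Un_cv (fun m => rsum d (s m)) (rsum d l).
Proof.
  induction d; intros H; simpl; [apply cv_const|].
  apply CV_plus; [apply IHd; intros|]; apply H; lia.
Qed.

Lemma cv_inv_N : Un_cv (fun m => / (INR m + 1)) 0.
Proof.
  intros eps He. destruct (archimed_cor1 eps He) as [N [HN HN0]]. exists N. intros m Hm.
  unfold Rdist. rewrite Rminus_0_r. assert (0 < INR m + 1) by (pose proof (pos_INR m); lra).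
  rewrite Rabs_right by (left; apply Rinv_0_lt_compat; auto).
  apply Rle_lt_trans with (/ INR N); auto. apply Rinv_le_contravar; [apply lt_0_INR; lia|].
  apply le_INR in Hm. lra.
Qed.

Lemma cv_squeeze (u : nat -> R) c (v : nat -> R) :
  (forall m, Rabs (u m - c) <= v m) -> Un_cv v 0 -> Un_cv u c.
Proof.
  intros H Hv eps He. destruct (Hv eps He) as [N HN]. exists N. intros m Hm.
  specialize (HN m Hm). unfold Rdist in *. rewrite Rminus_0_r in HN.
  eapply Rle_lt_trans; [apply H|]. eapply Rle_lt_trans; [apply RRle_abs|auto].
Qed.

Lemma cv_sqrt0 a : (forall m, 0 <= a m) -> Un_cv a 0 -> Un_cv (fun m => sqrt (a m)) 0.
Proof.
  intros Ha H eps He. destruct (H (eps ^ 2)) as [N HN]; [nra|]. exists N; intros m Hm.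
  specialize (HN m Hm). unfold Rdist in *. rewrite Rminus_0_r in *.
  rewrite Rabs_right in HN by (apply Rle_ge; auto).
  rewrite Rabs_right by (apply Rle_ge, sqrt_pos).
  rewrite <- (sqrt_pow2 eps) by lra. apply sqrt_lt_1_alt. split; auto.
Qed.

Lemma decr_le (a : nat -> R) :
  (forall m, a (S m) <= a m) -> forall N m, (N <= m)%nat -> a m <= a N.
Proof. intros H N m Hm. induction Hm; [lra|]. specialize (H m); lra. Qed.

Lemma cvc_const n x : cvc n (fun _ => x) x.
Proof. intros k _; apply cv_const. Qed.

Lemma cvc_vsub n a b A B : cvc n a A -> cvc n b B -> cvc n (fun m => vsub (a m) (b m)) (vsub A B).
Proof. intros Ha Hb k Hk. apply CV_minus; auto. Qed.

Lemma cv_ip n a b A B : cvc n a A -> cvc n b B -> Un_cv (fun m => ip n (a m) (b m)) (ip n A B).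
Proof. intros Ha Hb. apply cv_rsum. intros k Hk. apply CV_mult; auto. Qed.

Lemma cv_nsq n a A : cvc n a A -> Un_cv (fun m => nsq n (a m)) (nsq n A).
Proof.
  intros Ha. unfold nsq.
  replace (fun k => A k ^ 2) with (fun k => A k * A k) by (extensionality k; ring).
  replace (fun m => rsum n (fun k => a m k ^ 2)) with (fun m => ip n (a m) (a m))
    by (extensionality m; unfold ip; apply rsum_ext; intros; ring).
  apply cv_ip; auto.
Qed.

Lemma cvc_nsq n xs x : cvc n xs x -> Un_cv (fun m => nsq n (vsub (xs m) x)) 0.
Proof.
  intros H. replace 0 with (nsq n (vsub x x))
    by (unfold nsq, vsub; apply rsum_zero; intros; ring).
  apply cv_nsq, cvc_vsub; auto using cvc_const.
Qed.

Lemma nsq_cvc n a A : Un_cv (fun m => nsq n (vsub (a m) A)) 0 -> cvc n a A.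
Proof.
  intros H k Hk. apply (cv_squeeze _ _ (fun m => sqrt (nsq n (vsub (a m) A)))).
  - intros m. apply (coord_abs_le n (vsub (a m) A) k Hk).
  - apply cv_sqrt0; auto using nsq_nonneg.
Qed.


Lemma nsq_eventually_small n xs x : cvc n xs x ->
  forall e, 0 < e -> exists N, forall m, (N <= m)%nat -> nsq n (vsub (xs m) x) < e.
Proof.
  intros H e He. destruct (cvc_nsq n xs x H e He) as [N HN]. exists N; intros m Hm.
  specialize (HN m Hm). unfold Rdist in HN.
  rewrite Rminus_0_r, Rabs_right in HN by (apply Rle_ge, nsq_nonneg). exact HN.
Qed.

Lemma cauchy_lim n xs : (forall k, (k < n)%nat -> Cauchy_crit (fun m => xs m k)) ->
  exists x, supp n x /\ cvc n xs x.
Proof.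
  intros H.
  exists (fun k => if Nat.ltb k n then epsilon (inhabits 0) (fun l => Un_cv (fun m => xs m k) l)
                   else 0).
  split; intros k Hk; destruct (Nat.ltb_spec k n); auto; try lia.
  apply epsilon_spec. destruct (R_complete _ (H k Hk)) as [l Hl]; exists l; auto.
Qed.

Lemma nsq_blk_le I ni a b i : (i < I)%nat ->
  nsq (ni i) (vsub (blk ni a i) (blk ni b i)) <= nsq (ntot I ni) (vsub a b).
Proof.
  intros Hi. unfold nsq. rewrite rsum_blocks.
  set (g := fun j => rsum (ni j) (fun r => vsub a b (off ni j + r)%nat ^ 2)).
  replace (rsum (ni i) (fun k => vsub (blk ni a i) (blk ni b i) k ^ 2)) with (g i).
  - apply (rsum_term_le I g); auto. intros; apply rsum_nonneg; intros; apply pow2_ge_0.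
  - apply rsum_ext; intros r Hr. unfold vsub. rewrite !blk_eq; auto.
Qed.

Lemma inQ_closed_seq I ni Qi xs x : (forall i, (i < I)%nat -> closedQ (ni i) (Qi i)) ->
  (forall m, inQ I ni Qi (xs m)) -> cvc (ntot I ni) xs x -> supp (ntot I ni) x ->
  inQ I ni Qi x.
Proof.
  intros Hcl HQ Hc Hs. split; auto. intros i Hi. apply NNPP; intros HNo.
  destruct (Hcl i Hi (blk ni x i) (blk_supp ni x i) HNo) as [del [Hd Hdel]].
  destruct (nsq_eventually_small _ _ _ Hc (del ^ 2)) as [N HN]; [nra|].
  apply (Hdel (blk ni (xs N) i) (blk_supp ni (xs N) i)); [|apply (proj2 (HQ N)); auto].
  apply vnorm_lt_iff; auto. eapply Rle_lt_trans; [apply nsq_blk_le; eauto|auto].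
Qed.

(* A strictly
   increasing phi : nat -> nat is built from a cluster point by choosing, after
   the previous index, an index within 1/(m+1) of the cluster point. *)

Definition adh_index (un : nat -> R) (l : R) (N : nat) (e : R) : nat :=
  epsilon (inhabits 0%nat) (fun p => (N <= p)%nat /\ Rabs (un p - l) < e).

Fixpoint adh_subseq (un : nat -> R) (l : R) (m : nat) : nat :=
  match m with
  | O => adh_index un l 0 1
  | S m' => adh_index un l (S (adh_subseq un l m')) (/ (INR m + 1))
  end.

Lemma adh_index_spec un l N e : ValAdh un l -> 0 < e ->
  (N <= adh_index un l N e)%nat /\ Rabs (un (adh_index un l N e) - l) < e.
Proof.
  intros H He. unfold adh_index. apply epsilon_spec.
  destruct (H (disc l (mkposreal e He)) N) as [p [Hp Hd]].
  - exists (mkposreal e He); intros z Hz; auto.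
  - exists p; split; auto.
Qed.

Lemma adh_subseq_close un l m : ValAdh un l ->
  Rabs (un (adh_subseq un l m) - l) < / (INR m + 1).
Proof.
  intros H. destruct m as [|m].
  - replace (/ (INR 0 + 1)) with 1 by (simpl; field). apply adh_index_spec; auto; lra.
  - change (adh_subseq un l (S m))
      with (adh_index un l (S (adh_subseq un l m)) (/ (INR (S m) + 1))).
    apply adh_index_spec; auto. apply Rinv_0_lt_compat. pose proof (pos_INR (S m)); lra.
Qed.

Definition increasing (phi : nat -> nat) : Prop := forall m, (phi m < phi (S m))%nat.

Lemma increasing_ge phi : increasing phi -> forall m, (m <= phi m)%nat.
Proof. intros H m; induction m; [lia|]. specialize (H m); lia. Qed.

Lemma increasing_mono phi : increasing phi -> forall m p, (m <= p)%nat -> (phi m <= phi p)%nat.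
Proof. intros H m p Hmp. induction Hmp; [lia|]. specialize (H m0); lia. Qed.

Lemma sub_cv phi u l : increasing phi -> Un_cv u l -> Un_cv (fun m => u (phi m)) l.
Proof.
  intros Hp Hu eps He. destruct (Hu eps He) as [N HN]. exists N. intros m Hm.
  apply HN. pose proof (increasing_ge phi Hp m); lia.
Qed.

Lemma valadh_sub un l : ValAdh un l ->
  exists phi, increasing phi /\ Un_cv (fun m => un (phi m)) l.
Proof.
  intros H. exists (adh_subseq un l). split.
  - intros m. change (adh_subseq un l (S m))
      with (adh_index un l (S (adh_subseq un l m)) (/ (INR (S m) + 1))).
    assert (Hpos : 0 < / (INR (S m) + 1)) by (apply Rinv_0_lt_compat; pose proof (pos_INR (S m)); lra).
    pose proof (proj1 (adh_index_spec un l (S (adh_subseq un l m)) _ H Hpos)). lia.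
  - apply (cv_squeeze _ _ (fun m => / (INR m + 1))); [|apply cv_inv_N].
    intros m. left. apply adh_subseq_close; auto.
Qed.

Lemma bolzano_weierstrass_R (un : nat -> R) M : (forall m, Rabs (un m) <= M) ->
  exists phi l, increasing phi /\ Un_cv (fun m => un (phi m)) l.
Proof.
  intros H.
  destruct (Bolzano_Weierstrass un (fun c => -M <= c <= M) (compact_P3 (-M) M)) as [l Hl].
  { intros m. specialize (H m). unfold Rabs in H; destruct (Rcase_abs (un m)); lra. }
  destruct (valadh_sub un l Hl) as [phi [H1 H2]]. exists phi, l; auto.
Qed.

Lemma bolzano_weierstrass d (s : nat -> vec) M :
  (forall m k, (k < d)%nat -> Rabs (s m k) <= M) ->
  exists phi x, increasing phi /\ supp d x /\ cvc d (fun m => s (phi m)) x.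
Proof.
  induction d as [|d IH]; intros H.
  - exists (fun m => m), (fun _ => 0).
    split; [intros m; lia|]. split; [intros k _; reflexivity|intros k Hk; lia].
  - destruct IH as [phi [x [Hp [_ Hx]]]]; [intros m k Hk; apply H; lia|].
    destruct (bolzano_weierstrass_R (fun m => s (phi m) d) M) as [psi [l [Hps Hl]]];
      [intros m; apply H; lia|].
    exists (fun m => phi (psi m)),
           (fun k => if Nat.eqb k d then l else if Nat.ltb k d then x k else 0).
    repeat split.
    + intros m. specialize (Hps m). pose proof (Hp (psi m)).
      pose proof (increasing_mono phi Hp (S (psi m)) (psi (S m)) ltac:(lia)). lia.
    + intros k Hk. destruct (Nat.eqb_spec k d); destruct (Nat.ltb_spec k d); try lia; auto.
    + intros k Hk. destruct (Nat.eqb_spec k d) as [->|Hkd]; auto.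
      destruct (Nat.ltb_spec k d); try lia.
      apply (sub_cv psi (fun m => s (phi m) k)); [exact Hps|apply Hx; lia].
Qed.

Lemma pd_spec h x k : ex_pd h x k -> has_pd h x k (pd h x k).
Proof. intros [l Hl]. unfold pd. apply epsilon_spec. exists l; auto. Qed.

Lemma shift_shift p k a b : shift (shift p k a) k b = shift p k (a + b).
Proof. extensionality m. unfold shift. destruct (Nat.eqb m k); ring. Qed.

Lemma shift_0 p k : shift p k 0 = p.
Proof. extensionality m. unfold shift. destruct (Nat.eqb m k); ring. Qed.

Lemma deriv_translate (phi : R -> R) t l :
  derivable_pt_lim (fun s => phi (t + s)) 0 l -> derivable_pt_lim phi t l.
Proof.
  intros H eps He. destruct (H eps He) as [del Hd]. exists del. intros hh H1 H2.
  specialize (Hd hh H1 H2). cbv beta in Hd. rewrite Rplus_0_l, Rplus_0_r in Hd. auto.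
Qed.

Lemma deriv_shift h p k t : ex_pd h (shift p k t) k ->
  derivable_pt_lim (fun s => h (shift p k s)) t (pd h (shift p k t) k).
Proof.
  intros He. apply deriv_translate. pose proof (pd_spec _ _ _ He) as Hp. unfold has_pd in Hp.
  replace (fun s => h (shift p k (t + s))) with (fun s => h (shift (shift p k t) k s));
    [exact Hp|]. extensionality s. rewrite shift_shift; auto.
Qed.

Lemma MVT_any (f f' : R -> R) b :
  (forall c, Rabs c <= Rabs b -> derivable_pt_lim f c (f' c)) ->
  exists c, Rabs c <= Rabs b /\ f b - f 0 = f' c * b.
Proof.
  intros H. destruct (Rtotal_order 0 b) as [Hb|[Hb|Hb]].
  - destruct (MVT_cor2 f f' 0 b Hb) as [c [Hc1 Hc2]].
    { intros c Hc; apply H. rewrite !Rabs_right; lra. }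
    exists c; split; [rewrite !Rabs_right; lra|lra].
  - subst. exists 0; split; [lra|ring].
  - destruct (MVT_cor2 f f' b 0 Hb) as [c [Hc1 Hc2]].
    { intros c Hc; apply H. rewrite (Rabs_left b) by lra.
      unfold Rabs; destruct (Rcase_abs c); lra. }
    exists c; split; [rewrite (Rabs_left b), Rabs_left by lra; lra|lra].
Qed.

Lemma fin_del n (P : nat -> R -> Prop) :
  (forall j del del', 0 < del' <= del -> P j del -> P j del') ->
  (forall j, (j < n)%nat -> exists del, 0 < del /\ P j del) ->
  exists del, 0 < del /\ forall j, (j < n)%nat -> P j del.
Proof.
  intros Hm. induction n as [|n IH]; intros H; [exists 1; split; [lra|intros; lia]|].
  destruct IH as [d1 [Hd1 H1]]; [intros; apply H; lia|].
  destruct (H n (Nat.lt_succ_diag_r n)) as [d2 [Hd2 H2]].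
  exists (Rmin d1 d2). split; [apply Rmin_pos; auto|]. intros j Hj.
  assert (0 < Rmin d1 d2) by (apply Rmin_pos; auto).
  destruct (Nat.eq_dec j n) as [->|Hjn].
  - apply (Hm n d2); auto. split; auto. apply Rmin_r.
  - apply (Hm j d1); [split; auto; apply Rmin_l|]. apply H1; lia.
Qed.

Definition line (x d : vec) (t : R) : vec := fun k => x k + t * d k.

Definition staircase (x d : vec) (s : R) (j : nat) : vec :=
  fun k => if Nat.ltb k j then x k + s * d k else x k.

Lemma line_line x d a b : line (line x d a) d b = line x d (a + b).
Proof. extensionality k; unfold line; ring. Qed.

Lemma staircase_0 x d s : staircase x d s 0 = x.
Proof. extensionality k; unfold staircase. destruct (Nat.ltb_spec k 0); auto; lia. Qed.

Lemma staircase_end n x d s : supp n d -> staircase x d s n = line x d s.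
Proof.
  intros Hd; extensionality k; unfold staircase, line.
  destruct (Nat.ltb_spec k n); auto. rewrite Hd; auto; ring.
Qed.

Lemma staircase_S x d s j : staircase x d s (S j) = shift (staircase x d s j) j (s * d j).
Proof.
  extensionality k; unfold staircase, shift. destruct (Nat.eqb_spec k j) as [->|Hkj].
  - destruct (Nat.ltb_spec j (S j)); destruct (Nat.ltb_spec j j); try lia; ring.
  - destruct (Nat.ltb_spec k (S j)); destruct (Nat.ltb_spec k j); try lia; ring.
Qed.

Lemma staircase_supp n x d s j c :
  supp n x -> supp n d -> (j < n)%nat -> supp n (shift (staircase x d s j) j c).
Proof.
  intros Hx Hd Hj k Hk. unfold shift, staircase.
  destruct (Nat.eqb_spec k j); try lia. destruct (Nat.ltb_spec k j); try lia. auto.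
Qed.

Lemma staircase_dist n x d s j c : (j < n)%nat -> Rabs c <= Rabs (s * d j) ->
  nsq n (vsub (shift (staircase x d s j) j c) x) <= s ^ 2 * nsq n d.
Proof.
  intros Hj Hc. unfold nsq. rewrite <- rsum_scal. apply rsum_le. intros k Hk.
  unfold vsub, shift, staircase. destruct (Nat.eqb_spec k j) as [->|Hkj].
  - destruct (Nat.ltb_spec j j); try lia. replace (x j + c - x j) with c by ring.
    apply Rsqr_le_abs_1 in Hc. unfold Rsqr in Hc. simpl. lra.
  - destruct (Nat.ltb_spec k j).
    + replace (x k + s * d k - x k) with (s * d k) by ring. rewrite Rpow_mult_distr; lra.
    + replace (x k - x k) with 0 by ring.
      pose proof (pow2_ge_0 s); pose proof (pow2_ge_0 (d k)). simpl; nra.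
Qed.

Section Chain.
Variables (n : nat) (U : vec -> Prop) (h : vec -> R).
Hypothesis HU : open_in n U.
Hypothesis Hex : forall k, (k < n)%nat -> forall x, U x -> ex_pd h x k.
Hypothesis Hc : forall k, (k < n)%nat -> cont_on n U (fun z => pd h z k).

Definition grad_close (x : vec) (e : R) (z : vec) : Prop :=
  U z /\ forall j, (j < n)%nat -> Rabs (pd h z j - pd h x j) < e.

Lemma grad_close_near x e : U x -> 0 < e ->
  exists del, 0 < del /\ forall z, supp n z -> vnorm n (vsub z x) < del -> grad_close x e z.
Proof.
  intros Ux He.
  destruct (fin_del n (fun j del => forall z, supp n z -> U z -> vnorm n (vsub z x) < del ->
                                     Rabs (pd h z j - pd h x j) < e)) as [d0 [Hd0 H0]].
  { intros j del del' Hdd P z Sz Uz Hz. apply P; auto; lra. }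
  { intros j Hj. apply (Hc j Hj x Ux e He). }
  destruct (HU x Ux) as [d1 [Hd1 H1]].
  exists (Rmin d0 d1). split; [apply Rmin_pos; auto|].
  intros z Sz Hz. pose proof (Rmin_l d0 d1); pose proof (Rmin_r d0 d1).
  assert (Uz : U z) by (apply H1; auto; lra).
  split; auto. intros j Hj. apply H0; auto; lra.
Qed.

Lemma staircase_step x d s e j : supp n x -> supp n d -> (j < n)%nat ->
  (forall z, supp n z -> nsq n (vsub z x) <= s ^ 2 * nsq n d -> grad_close x e z) ->
  Rabs (h (staircase x d s (S j)) - h (staircase x d s j) - s * (pd h x j * d j))
    <= Rabs s * (e * Rabs (d j)).
Proof.
  intros Sx Sd Hj Hball. rewrite staircase_S.
  set (p := staircase x d s j).
  assert (Hnear : forall c, Rabs c <= Rabs (s * d j) -> grad_close x e (shift p j c)).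
  { intros c Hcb. apply Hball; [apply staircase_supp|apply staircase_dist]; auto. }
  destruct (MVT_any (fun t => h (shift p j t)) (fun t => pd h (shift p j t) j) (s * d j))
    as [c [Hc1 Hc2]].
  { intros c Hcb. apply deriv_shift, Hex; auto. apply (Hnear c Hcb). }
  cbv beta in Hc2. rewrite shift_0 in Hc2.
  replace (h (shift p j (s * d j)) - h p - s * (pd h x j * d j))
    with ((pd h (shift p j c) j - pd h x j) * (s * d j)) by (rewrite Hc2; ring).
  pose proof (proj2 (Hnear c Hc1) j Hj).
  rewrite Rabs_mult, Rabs_mult. pose proof (Rabs_pos s); pose proof (Rabs_pos (d j)).
  replace (Rabs s * (e * Rabs (d j))) with (e * (Rabs s * Rabs (d j))) by ring.
  apply Rmult_le_compat_r; [apply Rmult_le_pos|]; lra.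
Qed.

Lemma increment_estimate x d s e : supp n x -> supp n d ->
  (forall z, supp n z -> nsq n (vsub z x) <= s ^ 2 * nsq n d -> grad_close x e z) ->
  Rabs (h (line x d s) - h x - s * rsum n (fun k => pd h x k * d k))
    <= Rabs s * (e * rsum n (fun k => Rabs (d k))).
Proof.
  intros Sx Sd Hball.
  replace (h (line x d s) - h x) with (h (staircase x d s n) - h (staircase x d s 0))
    by (rewrite staircase_end, staircase_0; auto).
  rewrite (telescope n (fun j => h (staircase x d s j))).
  rewrite <- !rsum_scal, <- rsum_minus. eapply Rle_trans; [apply rsum_abs|].
  apply rsum_le. intros j Hj. apply staircase_step; auto.
Qed.

Lemma chain0 x d : U x -> supp n x -> supp n d ->
  derivable_pt_lim (fun t => h (line x d t)) 0 (rsum n (fun k => pd h x k * d k)).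
Proof.
  intros Ux Sx Sd eps He.
  set (SS := rsum n (fun k => Rabs (d k)) + 1).
  assert (HS : 1 <= SS)
    by (unfold SS; pose proof (rsum_nonneg n (fun k => Rabs (d k)) (fun k _ => Rabs_pos (d k))); lra).
  set (e := eps / (2 * SS)). assert (He' : 0 < e) by (unfold e; apply Rdiv_lt_0_compat; lra).
  destruct (grad_close_near x e Ux He') as [del [Hdel Hnear]].
  set (nd := sqrt (nsq n d)). assert (Hnd : 0 <= nd) by apply sqrt_pos.
  assert (Hdel' : 0 < del / (nd + 1)) by (apply Rdiv_lt_0_compat; lra).
  exists (mkposreal _ Hdel'). intros s Hs0 Hs. simpl in Hs.
  assert (Hsn : Rabs s * nd < del).
  { apply Rle_lt_trans with (Rabs s * (nd + 1)); [pose proof (Rabs_pos s); nra|].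
    apply (Rmult_lt_compat_r (nd + 1)) in Hs; [|lra].
    unfold Rdiv in Hs. rewrite Rmult_assoc, Rinv_l, Rmult_1_r in Hs by lra. auto. }
  assert (Hball : forall z, supp n z -> nsq n (vsub z x) <= s ^ 2 * nsq n d -> grad_close x e z).
  { intros z Sz Hz. apply Hnear; auto. apply vnorm_lt_iff; auto.
    assert (s ^ 2 * nsq n d = (Rabs s * nd) ^ 2)
      by (unfold nd; rewrite Rpow_mult_distr, pow2_abs, sqrt_sq_pow; auto using nsq_nonneg).
    assert (0 <= Rabs s * nd) by (apply Rmult_le_pos; auto; apply Rabs_pos). nra. }
  pose proof (increment_estimate x d s e Sx Sd Hball) as Hinc.
  rewrite Rplus_0_l. replace (line x d 0) with x by (extensionality k; unfold line; ring).
  assert (Hsp : 0 < Rabs s) by (apply Rabs_pos_lt; auto).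
  replace ((h (line x d s) - h x) / s - rsum n (fun k => pd h x k * d k))
    with ((h (line x d s) - h x - s * rsum n (fun k => pd h x k * d k)) / s) by (field; auto).
  unfold Rdiv. rewrite Rabs_mult, Rabs_inv.
  apply (Rmult_lt_reg_l (Rabs s)); auto.
  rewrite <- Rmult_assoc, (Rmult_comm (Rabs s)), Rmult_assoc, Rinv_r, Rmult_1_r by lra.
  eapply Rle_lt_trans; [apply Hinc|]. apply Rmult_lt_compat_l; auto.
  replace (rsum n (fun k => Rabs (d k))) with (SS - 1) by (unfold SS; ring).
  replace (e * (SS - 1)) with (eps * ((SS - 1) / (2 * SS))) by (unfold e; field; lra).
  assert ((SS - 1) / (2 * SS) < 1).
  { apply (Rmult_lt_reg_r (2 * SS)); [lra|]. unfold Rdiv; rewrite Rmult_assoc, Rinv_l; lra. }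
  assert (0 <= (SS - 1) / (2 * SS)) by (apply Rmult_le_pos; [|left; apply Rinv_0_lt_compat]; lra).
  nra.
Qed.

Lemma line_supp x d t : supp n x -> supp n d -> supp n (line x d t).
Proof. intros Hx Hd k Hk; unfold line; rewrite Hx, Hd; auto; ring. Qed.

Lemma chain x d t : U (line x d t) -> supp n x -> supp n d ->
  derivable_pt_lim (fun s => h (line x d s)) t (rsum n (fun k => pd h (line x d t) k * d k)).
Proof.
  intros Ux Sx Sd. apply deriv_translate.
  pose proof (chain0 (line x d t) d Ux (line_supp x d t Sx Sd) Sd) as H.
  replace (fun s => h (line x d (t + s))) with (fun s => h (line (line x d t) d s));
    [exact H|]. extensionality s. rewrite line_line; auto.
Qed.
End Chain.

Lemma convex_deriv (phi : R -> R) D :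
  (forall t, 0 < t < 1 -> phi t <= t * phi 1 + (1 - t) * phi 0) ->
  derivable_pt_lim phi 0 D -> D <= phi 1 - phi 0.
Proof.
  intros Hcv Hd. apply Rnot_lt_le; intros HN.
  set (e := (D - (phi 1 - phi 0)) / 2). assert (He : 0 < e) by (unfold e; lra).
  destruct (Hd e He) as [del Hdel]. pose proof (cond_pos del).
  set (t := Rmin (del / 2) (1/2)).
  assert (Ht : 0 < t) by (unfold t; apply Rmin_pos; lra).
  assert (Ht1 : t <= 1/2) by apply Rmin_r. assert (Ht2 : t <= del / 2) by apply Rmin_l.
  specialize (Hdel t ltac:(lra)). rewrite Rabs_right in Hdel by lra.
  specialize (Hdel ltac:(lra)). rewrite Rplus_0_l in Hdel. specialize (Hcv t ltac:(lra)).
  assert ((phi t - phi 0) / t <= phi 1 - phi 0).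
  { apply (Rmult_le_reg_r t); auto. unfold Rdiv; rewrite Rmult_assoc, Rinv_l by lra. lra. }
  apply Rabs_def2 in Hdel. unfold e in *. lra.
Qed.

Lemma min_deriv (phi : R -> R) D a b :
  (forall t, 0 < t <= 1 -> 0 <= phi t - phi 0 + a * t + b * t ^ 2) ->
  0 <= b -> derivable_pt_lim phi 0 D -> 0 <= D + a.
Proof.
  intros Hm Hb Hd. apply Rnot_lt_le; intros HN.
  set (G := D + a). set (e := - G / 2). assert (He : 0 < e) by (unfold e, G; lra).
  destruct (Hd e He) as [del Hdel]. pose proof (cond_pos del).
  set (t := Rmin (Rmin (del / 2) 1) (- G / (2 * (b + 1)))).
  assert (HG : 0 < - G / (2 * (b + 1))) by (apply Rdiv_lt_0_compat; unfold G; lra).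
  assert (Ht : 0 < t) by (unfold t; repeat apply Rmin_pos; lra).
  assert (Ht1 : t <= 1) by (unfold t; eapply Rle_trans; [apply Rmin_l|apply Rmin_r]).
  assert (Ht2 : t <= del / 2) by (unfold t; eapply Rle_trans; [apply Rmin_l|apply Rmin_l]).
  assert (Ht3 : t <= - G / (2 * (b + 1))) by apply Rmin_r.
  specialize (Hdel t ltac:(lra)). rewrite Rabs_right in Hdel by lra.
  specialize (Hdel ltac:(lra)). rewrite Rplus_0_l in Hdel. specialize (Hm t ltac:(lra)).
  assert (Hbt : b * t <= - G / 2).
  { assert (t * (2 * (b + 1)) <= - G).
    { apply (Rmult_le_compat_r (2 * (b + 1))) in Ht3; [|lra].
      unfold Rdiv in Ht3; rewrite Rmult_assoc, Rinv_l, Rmult_1_r in Ht3 by lra; auto. }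
    nra. }
  assert (0 <= (phi t - phi 0) / t + a + b * t).
  { apply (Rmult_le_reg_r t); auto.
    replace (((phi t - phi 0) / t + a + b * t) * t) with (phi t - phi 0 + a * t + b * t ^ 2)
      by (field; lra). lra. }
  apply Rabs_def2 in Hdel. unfold e, G in *. lra.
Qed.

Section Projection.
Variables (n : nat) (C : vec -> Prop).
Hypothesis HCcv : forall u v t, C u -> C v -> 0 <= t <= 1 -> C (comb t u v).
Hypothesis HCcl : forall xs x, (forall m, C (xs m)) -> cvc n xs x -> supp n x -> C x.

(* p is the projection of u onto C: the obtuse-angle characterization. *)
Definition isproj (u p : vec) : Prop :=
  C p /\ forall q, C q -> ip n (vsub u p) (vsub q p) <= 0.

Lemma min_dist_isproj u p : C p -> (forall q, C q -> nsq n (vsub u p) <= nsq n (vsub u q)) ->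
  isproj u p.
Proof.
  intros Cp Hmin. split; auto. intros q Cq.
  set (a := ip n (vsub u p) (vsub q p)). set (b := nsq n (vsub q p)).
  assert (Hb : 0 <= b) by apply nsq_nonneg.
  assert (Ht : forall t, 0 < t <= 1 -> 2 * t * a <= t ^ 2 * b).
  { intros t Ht. pose proof (Hmin _ (HCcv q p t Cq Cp ltac:(lra))).
    assert (nsq n (vsub u (comb t q p)) = nsq n (vsub u p) - 2 * t * a + t ^ 2 * b).
    { unfold nsq, a, b, ip. rewrite <- rsum_quad. apply rsum_ext; intros; unfold vsub, comb; ring. }
    lra. }
  apply Rnot_lt_le; intros Ha.
  set (t := Rmin 1 (a / (b + 1))).
  assert (Ht0 : 0 < t) by (apply Rmin_pos; [lra|apply Rdiv_lt_0_compat; lra]).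
  assert (Ht1 : t <= 1) by apply Rmin_l. assert (Ht2 : t <= a / (b + 1)) by apply Rmin_r.
  specialize (Ht t (conj Ht0 Ht1)).
  assert (t * (b + 1) <= a).
  { apply (Rmult_le_compat_r (b + 1)) in Ht2; [|lra].
    unfold Rdiv in Ht2. rewrite Rmult_assoc, Rinv_l, Rmult_1_r in Ht2 by lra. auto. }
  assert (2 * a <= t * b) by (apply (Rmult_le_reg_l t); auto; simpl in Ht; lra).
  nra.
Qed.

Lemma parallelogram u a b : nsq n (vsub a b) =
  2 * nsq n (vsub u a) + 2 * nsq n (vsub u b) - 4 * nsq n (vsub u (comb (1/2) a b)).
Proof.
  unfold nsq. rewrite <- !rsum_scal, <- rsum_plus, <- rsum_minus.
  apply rsum_ext; intros; unfold vsub, comb. field.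
Qed.

Lemma dist_inf u q0 : C q0 -> exists d : R, (forall q, C q -> d <= nsq n (vsub u q)) /\
  forall e, 0 < e -> exists q, C q /\ nsq n (vsub u q) < d + e.
Proof.
  intros Cq0. set (E := fun s => exists q, C q /\ s = - nsq n (vsub u q)).
  destruct (completeness E) as [M [HM1 HM2]].
  { exists 0. intros s [q [_ ->]]. pose proof (nsq_nonneg n (vsub u q)); lra. }
  { exists (- nsq n (vsub u q0)); exists q0; auto. }
  exists (- M). split.
  - intros q Hq. assert (- nsq n (vsub u q) <= M) by (apply HM1; exists q; auto). lra.
  - intros e He. apply NNPP; intros HN. assert (M <= M - e); [|lra].
    apply HM2. intros s [q [Hq ->]]. apply Rnot_lt_le; intros Hlt.
    apply HN. exists q; split; auto; lra.
Qed.

(* The infimum is attained: a minimizing sequence is Cauchy by the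
   parallelogram law, and its limit lies in the closed set C. *)
Lemma min_dist_exists u q0 : C q0 ->
  exists p, C p /\ forall q, C q -> nsq n (vsub u p) <= nsq n (vsub u q).
Proof.
  intros Cq0. destruct (dist_inf u q0 Cq0) as [d [Hlow Happ]].
  set (qs := fun m : nat => epsilon (inhabits u)
               (fun q => C q /\ nsq n (vsub u q) < d + / (INR m + 1))).
  assert (Hqs : forall m, C (qs m) /\ nsq n (vsub u (qs m)) < d + / (INR m + 1)).
  { intros m. apply epsilon_spec, Happ, Rinv_0_lt_compat. pose proof (pos_INR m); lra. }
  assert (Hpar : forall m p, nsq n (vsub (qs m) (qs p)) <= 2 * / (INR m + 1) + 2 * / (INR p + 1)).
  { intros m p. destruct (Hqs m) as [Qm Hm]. destruct (Hqs p) as [Qp Hp].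
    pose proof (Hlow _ (HCcv (qs m) (qs p) (1/2) Qm Qp ltac:(lra))).
    rewrite (parallelogram u). lra. }
  assert (Hcau : forall k, (k < n)%nat -> Cauchy_crit (fun m => qs m k)).
  { intros k Hk eps He. destruct (archimed_cor1 (eps ^ 2 / 4)) as [N [HN HN0]]; [nra|].
    exists N. intros m p Hm Hp. unfold Rdist. apply abs_lt_of_sq; [lra|].
    apply Rle_lt_trans with (nsq n (vsub (qs m) (qs p)));
      [apply (coord_le_nsq n (vsub (qs m) (qs p))); auto|].
    eapply Rle_lt_trans; [apply Hpar|].
    assert (forall j, (N <= j)%nat -> / (INR j + 1) < eps ^ 2 / 4).
    { intros j Hj. apply Rle_lt_trans with (/ INR N); auto.
      apply Rinv_le_contravar; [apply lt_0_INR; lia|]. apply le_INR in Hj; lra. }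
    pose proof (H m Hm). pose proof (H p Hp). lra. }
  destruct (cauchy_lim n qs Hcau) as [p [Sp Hp]].
  assert (Cp : C p) by (apply (HCcl qs p); auto; intros m; apply (Hqs m)).
  exists p. split; auto. intros q Cq. apply Rle_trans with d; [|apply Hlow; auto].
  apply (Rle_cv_lim (Un := fun m => nsq n (vsub u (qs m))) (Vn := fun m => d + / (INR m + 1))).
  - intros m; left; apply (Hqs m).
  - apply cv_nsq, cvc_vsub; auto using cvc_const.
  - pose proof (CV_plus _ _ _ _ (cv_const d) cv_inv_N) as Hlim.
    rewrite Rplus_0_r in Hlim. exact Hlim.
Qed.

Lemma proj_exists u q0 : C q0 -> exists p, isproj u p.
Proof.
  intros Cq0. destruct (min_dist_exists u q0 Cq0) as [p [Cp Hp]].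
  exists p. apply min_dist_isproj; auto.
Qed.

Lemma proj_nonexp u1 u2 p1 p2 : isproj u1 p1 -> isproj u2 p2 ->
  nsq n (vsub p1 p2) <= nsq n (vsub u1 u2).
Proof.
  intros [Q1 H1] [Q2 H2]. specialize (H1 p2 Q2). specialize (H2 p1 Q1).
  unfold ip, nsq, vsub in *.
  assert (E : rsum n (fun k => (p1 k - p2 k) ^ 2)
              = rsum n (fun k => (u1 k - u2 k) * (p1 k - p2 k))
                + rsum n (fun k => (u1 k - p1 k) * (p2 k - p1 k))
                + rsum n (fun k => (u2 k - p2 k) * (p1 k - p2 k)))
    by (rewrite <- !rsum_plus; apply rsum_ext; intros; ring).
  assert (rsum n (fun k => (u1 k - u2 k) * (p1 k - p2 k))
          <= rsum n (fun k => (u1 k - u2 k) ^ 2) / 2 + rsum n (fun k => (p1 k - p2 k) ^ 2) / 2).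
  { unfold Rdiv. rewrite !(Rmult_comm _ (/ 2)), <- !rsum_scal, <- rsum_plus.
    apply rsum_le. intros k Hk. pose proof (pow2_ge_0 (u1 k - u2 k - (p1 k - p2 k))). nra. }
  lra.
Qed.
End Projection.

Lemma pow_le_mono q m N : 0 <= q <= 1 -> (N <= m)%nat -> q ^ m <= q ^ N.
Proof.
  intros Hq Hm. induction Hm; [lra|]. simpl. pose proof (pow_le q m (proj1 Hq)). nra.
Qed.

Lemma geometric_steps_cauchy (u : nat -> R) a q : 0 <= a -> 0 <= q < 1 ->
  (forall m, Rabs (u (S m) - u m) <= a * q ^ m) -> Cauchy_crit u.
Proof.
  intros Ha Hq Hcoord.
  assert (Htail : forall m j, Rabs (u (m + j)%nat - u m) <= a * (q ^ m - q ^ (m + j)) / (1 - q)).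
  { intros m j. induction j as [|j IH].
    - rewrite Nat.add_0_r, Rminus_diag, Rabs_R0, Rminus_diag. unfold Rdiv; lra.
    - rewrite Nat.add_succ_r.
      replace (u (S (m + j)) - u m) with ((u (S (m + j)) - u (m + j)%nat) + (u (m + j)%nat - u m))
        by ring.
      eapply Rle_trans; [apply Rabs_triang|]. pose proof (Hcoord (m + j)%nat).
      replace (a * (q ^ m - q ^ S (m + j)) / (1 - q))
        with (a * q ^ (m + j) + a * (q ^ m - q ^ (m + j)) / (1 - q)) by (simpl; field; lra).
      lra. }
  intros eps He.
  destruct (pow_lt_1_zero q ltac:(rewrite Rabs_right; lra) (eps * (1 - q) / (a + 1))) as [N HN].
  { apply Rdiv_lt_0_compat; [apply Rmult_lt_0_compat|]; lra. }
  assert (Hb : forall m j, (N <= m)%nat -> Rabs (u (m + j)%nat - u m) < eps).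
  { intros m j Hm. eapply Rle_lt_trans; [apply Htail|].
    assert (Hqm : q ^ m < eps * (1 - q) / (a + 1)).
    { specialize (HN N (le_n N)). rewrite Rabs_right in HN by (apply Rle_ge, pow_le; lra).
      apply Rle_lt_trans with (q ^ N); [apply pow_le_mono; [lra|lia]|exact HN]. }
    pose proof (pow_le q (m + j) (proj1 Hq)). pose proof (pow_le q m (proj1 Hq)).
    apply (Rmult_lt_reg_r (1 - q)); [lra|]. unfold Rdiv. rewrite Rmult_assoc, Rinv_l, Rmult_1_r by lra.
    assert (a * q ^ m < eps * (1 - q)).
    { apply Rle_lt_trans with ((a + 1) * q ^ m); [nra|].
      replace (eps * (1 - q)) with ((a + 1) * (eps * (1 - q) / (a + 1))) by (field; lra).
      apply Rmult_lt_compat_l; lra. }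
    nra. }
  exists N. intros m p Hm Hp. unfold Rdist. destruct (Nat.le_ge_cases m p).
  - replace p with (m + (p - m))%nat by lia. rewrite Rabs_minus_sym. apply Hb; lia.
  - replace m with (p + (m - p))%nat by lia. apply Hb; lia.
Qed.

Lemma geometric_cauchy n (xs : nat -> vec) c D0 : 0 <= c < 1 ->
  (forall m, nsq n (vsub (xs (S m)) (xs m)) <= c ^ m * D0) ->
  forall k, (k < n)%nat -> Cauchy_crit (fun m => xs m k).
Proof.
  intros Hc Hstep k Hk.
  apply (geometric_steps_cauchy _ (sqrt (Rmax D0 0)) (sqrt c)); [apply sqrt_pos| |].
  { split; [apply sqrt_pos|rewrite <- sqrt_1; apply sqrt_lt_1_alt; lra]. }
  intros m. apply abs_le_of_sq; [apply Rmult_le_pos; [apply sqrt_pos|apply pow_le, sqrt_pos]|].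
  apply Rle_trans with (nsq n (vsub (xs (S m)) (xs m)));
    [apply (coord_le_nsq n (vsub (xs (S m)) (xs m))); auto|].
  eapply Rle_trans; [apply Hstep|].
  rewrite Rpow_mult_distr, <- pow_mult, (Nat.mul_comm m 2), pow_mult.
  rewrite (sqrt_sq_pow c), (sqrt_sq_pow (Rmax D0 0)) by (try apply Rmax_r; lra).
  pose proof (pow_le c m (proj1 Hc)). pose proof (Rmax_l D0 0). nra.
Qed.

Lemma banach n (Q : vec -> Prop) (T : vec -> vec) c x0 :
  0 <= c < 1 -> Q x0 -> (forall x, Q (T x)) ->
  (forall x z, Q x -> Q z -> nsq n (vsub (T x) (T z)) <= c * nsq n (vsub x z)) ->
  (forall xs x, (forall m, Q (xs m)) -> cvc n xs x -> supp n x -> Q x) ->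
  exists x, Q x /\ forall k, (k < n)%nat -> T x k = x k.
Proof.
  intros Hc Q0 QT HT Hcl.
  set (xs := fun m => Nat.iter m T x0).
  assert (Qxs : forall m, Q (xs m)) by (intros [|m]; simpl; auto).
  assert (Hstep : forall m, nsq n (vsub (xs (S m)) (xs m)) <= c ^ m * nsq n (vsub (xs 1%nat) (xs 0%nat))).
  { induction m as [|m IH]; [simpl; lra|].
    change (nsq n (vsub (T (xs (S m))) (T (xs m))) <= c ^ S m * nsq n (vsub (xs 1%nat) (xs 0%nat))).
    eapply Rle_trans; [apply HT; auto|]. rewrite <- tech_pow_Rmult, Rmult_assoc.
    apply Rmult_le_compat_l; [lra|exact IH]. }
  destruct (cauchy_lim n xs (geometric_cauchy n xs c _ Hc Hstep)) as [x [Sx Hx]].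
  assert (Qx : Q x) by (apply (Hcl xs); auto).
  exists x; split; auto. intros k Hk.
  (* xs (S m) = T (xs m) converges both to x and to T x *)
  assert (HTx : cvc n (fun m => xs (S m)) (T x)).
  { apply nsq_cvc. apply (cv_squeeze _ _ (fun m => c * nsq n (vsub (xs m) x))).
    - intros m. rewrite Rminus_0_r, Rabs_right by (apply Rle_ge, nsq_nonneg).
      change (xs (S m)) with (T (xs m)). apply HT; auto.
    - replace 0 with (c * 0) by ring. apply CV_mult; [apply cv_const|apply cvc_nsq; auto]. }
  apply (UL_sequence (fun m => xs (S m) k)); [apply HTx; auto|].
  apply (sub_cv S (fun m => xs m k)); [intros m; lia|apply Hx; auto].
Qed.

Section Game.
Variables (I : nat) (ni : nat -> nat) (Qi : nat -> vec -> Prop) (f : nat -> vec -> R).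
Hypothesis Hcv : forall i, (i < I)%nat -> convexQ (ni i) (Qi i).
Hypothesis Hcl : forall i, (i < I)%nat -> closedQ (ni i) (Qi i).
Hypothesis Hfcv : forall i, (i < I)%nat -> forall x, inQ I ni Qi x ->
  forall u v t, supp (ni i) u -> supp (ni i) v -> Qi i u -> Qi i v -> 0 <= t <= 1 ->
    f i (upd ni x i (fun k => t * u k + (1 - t) * v k))
      <= t * f i (upd ni x i u) + (1 - t) * f i (upd ni x i v).
Hypothesis Hfreg : forall i, (i < I)%nat ->
  exists U, open_in (ntot I ni) U /\ (forall x, inQ I ni Qi x -> U x) /\
    C2_on (ntot I ni) U (f i).
Hypothesis Hfbd : forall i, (i < I)%nat -> exists B, forall x, inQ I ni Qi x ->
  forall k l, (k < ntot I ni)%nat -> (l < ntot I ni)%nat ->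
    Rabs (pd (f i) x k) <= B /\ Rabs (pd (fun z => pd (f i) z k) x l) <= B.
Hypothesis Hmon : monotone_on I ni Qi (Fgrad ni f).

Definition Gv (x : vec) : vec := asm I ni (fun i r => Fgrad ni f i x r).

Lemma ip_blocks u w : ip (ntot I ni) u w =
  rsum I (fun i => rsum (ni i) (fun r => u (off ni i + r)%nat * w (off ni i + r)%nat)).
Proof. apply rsum_blocks. Qed.

Lemma ip_Gv x w : ip (ntot I ni) (Gv x) w =
  rsum I (fun i => rsum (ni i) (fun r => Fgrad ni f i x r * w (off ni i + r)%nat)).
Proof.
  rewrite ip_blocks. apply rsum_ext; intros i Hi. apply rsum_ext; intros r Hr.
  unfold Gv. rewrite asm_at; auto.
Qed.

Definition solves_VI (tau : R) (y x : vec) : Prop :=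
  inQ I ni Qi x /\ forall z, inQ I ni Qi z ->
    0 <= ip (ntot I ni) (Gv x) (vsub z x) + tau * ip (ntot I ni) (vsub x y) (vsub z x).

Lemma VI_pairing_blocks tau y x z :
  ip (ntot I ni) (Gv x) (vsub z x) + tau * ip (ntot I ni) (vsub x y) (vsub z x)
  = rsum I (fun i => rsum (ni i) (fun r => Ftau ni (Fgrad ni f) tau y i x r
                                           * (z (off ni i + r)%nat - x (off ni i + r)%nat))).
Proof.
  rewrite ip_Gv, ip_blocks, <- rsum_scal, <- rsum_plus. apply rsum_ext; intros i Hi.
  rewrite <- rsum_scal, <- rsum_plus. apply rsum_ext; intros r Hr. unfold Ftau, vsub. ring.
Qed.

Definition dev_dir (x : vec) (i : nat) (v : vec) : vec :=
  fun k => if inb ni i k then v (k - off ni i)%nat - x k else 0.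

Lemma dev_dir_supp x i v : (i < I)%nat -> supp (ntot I ni) (dev_dir x i v).
Proof.
  intros Hi k Hk. unfold dev_dir, inb. pose proof (off_ntot I ni i Hi).
  destruct (Nat.leb_spec (off ni i) k); destruct (Nat.ltb_spec k (off ni i + ni i));
    simpl; auto; lia.
Qed.

Lemma dev_dir_at x i v r :
  (r < ni i)%nat -> dev_dir x i v (off ni i + r)%nat = v r - x (off ni i + r)%nat.
Proof. intros Hr. unfold dev_dir. rewrite inb_true by auto. do 2 f_equal. lia. Qed.

Lemma dev_dir_other x i v j r :
  j <> i -> (r < ni j)%nat -> dev_dir x i v (off ni j + r)%nat = 0.
Proof. intros; unfold dev_dir. rewrite inb_false; auto. Qed.

Lemma line_dev_dir x i v t :
  line x (dev_dir x i v) t = upd ni x i (fun r => t * v r + (1 - t) * blk ni x i r).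
Proof.
  extensionality k. unfold line, dev_dir, upd, inb, blk.
  destruct (Nat.leb_spec (off ni i) k); destruct (Nat.ltb_spec k (off ni i + ni i));
    simpl; try ring.
  destruct (Nat.ltb_spec (k - off ni i) (ni i)); try lia.
  replace (off ni i + (k - off ni i))%nat with k by lia. ring.
Qed.

Lemma line_dev_dir1 x i v : supp (ni i) v -> line x (dev_dir x i v) 1 = upd ni x i v.
Proof.
  intros Hv. rewrite line_dev_dir. f_equal. extensionality r.
  unfold blk. destruct (Nat.ltb_spec r (ni i)); ring.
Qed.

Lemma line0 x d : line x d 0 = x.
Proof. extensionality k. unfold line; ring. Qed.

Lemma prox_term_line x y i v t :
  rsum (ni i) (fun r => (line x (dev_dir x i v) t (off ni i + r)%nat - y (off ni i + r)%nat) ^ 2)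
  = rsum (ni i) (fun r => (x (off ni i + r)%nat - y (off ni i + r)%nat) ^ 2)
    + 2 * t * rsum (ni i) (fun r => (x (off ni i + r)%nat - y (off ni i + r)%nat)
                                    * (v r - x (off ni i + r)%nat))
    + t ^ 2 * rsum (ni i) (fun r => (v r - x (off ni i + r)%nat) ^ 2).
Proof.
  rewrite <- !rsum_scal, <- !rsum_plus. apply rsum_ext; intros r Hr.
  unfold line. rewrite dev_dir_at by auto. ring.
Qed.

Lemma deriv_dev x i v : (i < I)%nat -> inQ I ni Qi x ->
  derivable_pt_lim (fun t => f i (line x (dev_dir x i v) t)) 0
    (rsum (ni i) (fun r => Fgrad ni f i x r * (v r - x (off ni i + r)%nat))).
Proof.
  intros Hi Hx. destruct (Hfreg i Hi) as [U [HU [HQU [_ [H1 _]]]]].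
  pose proof (chain0 (ntot I ni) U (f i) HU (fun k Hk => proj1 (H1 k Hk))
                (fun k Hk => proj2 (H1 k Hk)) x (dev_dir x i v)
                (HQU x Hx) (proj1 Hx) (dev_dir_supp x i v Hi)) as H.
  rewrite (rsum_blockonly I ni i _ Hi) in H.
  - erewrite rsum_ext; [exact H|]. intros r Hr. cbv beta. rewrite dev_dir_at; auto.
  - intros j r Hj Hji Hr. rewrite dev_dir_other; auto; ring.
Qed.

Definition dev_pairing (tau : R) (y x : vec) (i : nat) (v : vec) : R :=
  rsum (ni i) (fun r => Ftau ni (Fgrad ni f) tau y i x r * (v r - x (off ni i + r)%nat)).

Lemma dev_pairing_split tau y x i v : dev_pairing tau y x i v =
  rsum (ni i) (fun r => Fgrad ni f i x r * (v r - x (off ni i + r)%nat))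
  + tau * rsum (ni i) (fun r => (x (off ni i + r)%nat - y (off ni i + r)%nat)
                                * (v r - x (off ni i + r)%nat)).
Proof. unfold dev_pairing. rewrite <- rsum_scal, <- rsum_plus. apply rsum_ext; intros; unfold Ftau; ring. Qed.

Lemma dev_pairing_nonneg tau y x i v : 0 <= tau -> (i < I)%nat -> inQ I ni Qi x ->
  (forall t, 0 < t <= 1 ->
     fprox ni f tau y i x <= fprox ni f tau y i (line x (dev_dir x i v) t)) ->
  0 <= dev_pairing tau y x i v.
Proof.
  intros Htau Hi Hx Hmin. rewrite dev_pairing_split.
  set (A := rsum (ni i) (fun r => (x (off ni i + r)%nat - y (off ni i + r)%nat)
                                  * (v r - x (off ni i + r)%nat))).
  set (B := rsum (ni i) (fun r => (v r - x (off ni i + r)%nat) ^ 2)).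
  assert (HB : 0 <= B) by (apply rsum_nonneg; intros; apply pow2_ge_0).
  apply (min_deriv (fun t => f i (line x (dev_dir x i v) t)) _ (tau * A) (tau / 2 * B));
    [|apply Rmult_le_pos; lra|apply deriv_dev; auto].
  intros t Ht. specialize (Hmin t Ht). unfold fprox in Hmin.
  rewrite prox_term_line in Hmin. fold A B in Hmin. cbv beta. rewrite line0. nra.
Qed.

(* Sufficiency: by convexity of f_i in x_i, a nonnegative partial pairing makes
   the deviation to v unprofitable. *)
Lemma dev_unprofitable tau y x i v : 0 <= tau -> (i < I)%nat -> inQ I ni Qi x ->
  supp (ni i) v -> Qi i v -> 0 <= dev_pairing tau y x i v ->
  fprox ni f tau y i x <= fprox ni f tau y i (upd ni x i v).
Proof.
  intros Htau Hi Hx Hv Qv HG. rewrite dev_pairing_split in HG.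
  set (phi := fun t => f i (line x (dev_dir x i v) t)).
  assert (Hc : forall t, 0 < t < 1 -> phi t <= t * phi 1 + (1 - t) * phi 0).
  { intros t Ht. unfold phi. rewrite line_dev_dir, line_dev_dir1, line0 by auto.
    rewrite <- (upd_blk ni x i) at 3.
    apply Hfcv; auto; [apply blk_supp|apply (proj2 Hx i Hi)|lra]. }
  pose proof (convex_deriv phi _ Hc (deriv_dev x i v Hi Hx)) as Hcd.
  unfold phi in Hcd. rewrite line0, line_dev_dir1 in Hcd by auto.
  unfold fprox. rewrite <- (line_dev_dir1 x i v Hv), prox_term_line, line_dev_dir1 by auto.
  set (A := rsum (ni i) (fun r => (x (off ni i + r)%nat - y (off ni i + r)%nat)
                                  * (v r - x (off ni i + r)%nat))) in *.
  set (B := rsum (ni i) (fun r => (v r - x (off ni i + r)%nat) ^ 2)).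
  assert (0 <= B) by (apply rsum_nonneg; intros; apply pow2_ge_0).
  assert (0 <= tau * B) by (apply Rmult_le_pos; lra).
  nra.
Qed.

Lemma NE_VI tau y x : 0 <= tau -> is_NE I ni Qi (fprox ni f tau y) x -> solves_VI tau y x.
Proof.
  intros Htau [Hx Hne]. split; auto. intros z Hz. rewrite VI_pairing_blocks.
  apply rsum_nonneg. intros i Hi.
  rewrite (rsum_ext (ni i) _ (fun r => Ftau ni (Fgrad ni f) tau y i x r
                                        * (blk ni z i r - x (off ni i + r)%nat)))
    by (intros r Hr; rewrite blk_eq; auto).
  apply (dev_pairing_nonneg tau y x i (blk ni z i)); auto.
  intros t Ht. rewrite line_dev_dir. apply Hne; auto.
  - intros k Hk. unfold blk. destruct (Nat.ltb_spec k (ni i)); try lia. ring.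
  - apply Hcv; auto using blk_supp; [apply (proj2 Hz i Hi)|apply (proj2 Hx i Hi)|lra].
Qed.

Lemma VI_NE tau y x : 0 <= tau -> solves_VI tau y x -> is_NE I ni Qi (fprox ni f tau y) x.
Proof.
  intros Htau [Hx Hvi]. split; auto. intros i Hi v Hv Qv.
  apply dev_unprofitable; auto.
  specialize (Hvi (upd ni x i v) (inQ_upd I ni Qi x i v Hi Hx Hv Qv)).
  rewrite VI_pairing_blocks, (rsum_single I _ i Hi) in Hvi.
  - unfold dev_pairing. erewrite rsum_ext; [exact Hvi|].
    intros r Hr; cbv beta; rewrite upd_in; auto.
  - intros j Hj Hji. apply rsum_zero; intros r Hr. rewrite upd_other; auto. ring.
Qed.

Lemma Gv_monotone x z : inQ I ni Qi x -> inQ I ni Qi z ->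
  0 <= ip (ntot I ni) (vsub (Gv x) (Gv z)) (vsub x z).
Proof.
  intros Hx Hz. rewrite ip_blocks. erewrite rsum_ext; [apply (Hmon x z Hx Hz)|].
  intros i Hi. apply rsum_ext; intros r Hr. unfold vsub, Gv. rewrite !asm_at; auto.
Qed.

Lemma line_comb z x t : line z (vsub x z) t = comb t x z.
Proof. extensionality k; unfold line, comb, vsub; ring. Qed.

(* Bounded second derivatives make each first partial derivative Lipschitz on Q
   (mean value theorem along the segment [z, x], which stays in Q by convexity). *)
Lemma pd_lip i k B x z : (i < I)%nat -> (k < ntot I ni)%nat -> inQ I ni Qi x -> inQ I ni Qi z ->
  (forall w, inQ I ni Qi w -> forall l, (l < ntot I ni)%nat ->
     Rabs (pd (fun z => pd (f i) z k) w l) <= B) ->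
  Rabs (pd (f i) x k - pd (f i) z k) <= B * rsum (ntot I ni) (fun l => Rabs (x l - z l)).
Proof.
  intros Hi Hk Hx Hz HB.
  destruct (Hfreg i Hi) as [U [HU [HQU [_ [_ H2]]]]].
  set (h := fun w => pd (f i) w k). set (d := vsub x z).
  assert (Sd : supp (ntot I ni) d)
    by (intros l Hl; unfold d, vsub; rewrite (proj1 Hx), (proj1 Hz); auto; ring).
  assert (Hseg : forall c, 0 <= c <= 1 -> inQ I ni Qi (line z d c))
    by (intros c Hc; unfold d; rewrite line_comb; apply inQ_comb; auto).
  destruct (MVT_cor2 (fun s => h (line z d s))
              (fun s => rsum (ntot I ni) (fun l => pd h (line z d s) l * d l)) 0 1 Rlt_0_1)
    as [c [Hc2 Hc1]].
  { intros c Hc. apply (chain (ntot I ni) U h HU (fun l Hl => proj1 (H2 k l Hk Hl))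
                              (fun l Hl => proj2 (H2 k l Hk Hl)));
      [apply HQU, Hseg; lra|exact (proj1 Hz)|exact Sd]. }
  replace (line z d 1) with x in Hc2 by (extensionality l; unfold line, d, vsub; ring).
  replace (line z d 0) with z in Hc2 by (extensionality l; unfold line, d, vsub; ring).
  unfold h in Hc2. rewrite Hc2, Rminus_0_r, Rmult_1_r.
  eapply Rle_trans; [apply rsum_abs|]. rewrite <- rsum_scal. apply rsum_le. intros l Hl.
  rewrite Rabs_mult. apply Rmult_le_compat_r; [apply Rabs_pos|]. apply HB; auto. apply Hseg; lra.
Qed.

Lemma second_derivative_bound : exists B, 0 <= B /\ forall i, (i < I)%nat ->
  forall x, inQ I ni Qi x -> forall k l, (k < ntot I ni)%nat -> (l < ntot I ni)%nat ->
    Rabs (pd (fun z => pd (f i) z k) x l) <= B.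
Proof.
  cut (forall J, (J <= I)%nat -> exists B, 0 <= B /\ forall i, (i < J)%nat ->
         forall x, inQ I ni Qi x -> forall k l, (k < ntot I ni)%nat -> (l < ntot I ni)%nat ->
           Rabs (pd (fun z => pd (f i) z k) x l) <= B).
  { intros H. apply (H I); lia. }
  induction J as [|J IH]; intros HJ; [exists 0; split; [lra|intros; lia]|].
  destruct IH as [B1 [HB1 H1]]; [lia|]. destruct (Hfbd J ltac:(lia)) as [B2 H2].
  exists (Rmax B1 B2). split; [eapply Rle_trans; [apply HB1|apply Rmax_l]|].
  intros i Hi x Hx k l Hk Hl. destruct (Nat.eq_dec i J) as [->|HiJ].
  - eapply Rle_trans; [apply (H2 x Hx k l Hk Hl)|apply Rmax_r].
  - eapply Rle_trans; [apply H1; auto; lia|apply Rmax_l].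
Qed.

Lemma Gv_lip : exists L, 0 <= L /\ forall x z, inQ I ni Qi x -> inQ I ni Qi z ->
  nsq (ntot I ni) (vsub (Gv x) (Gv z)) <= L * nsq (ntot I ni) (vsub x z).
Proof.
  destruct second_derivative_bound as [B [HB0 HB]].
  set (n := ntot I ni). exists (B ^ 2 * INR n * INR n).
  split; [pose proof (pos_INR n); pose proof (pow2_ge_0 B); apply Rmult_le_pos; [apply Rmult_le_pos|]; lra|].
  intros x z Hx Hz. set (S := nsq n (vsub x z)).
  assert (HS : (rsum n (fun l => Rabs (x l - z l))) ^ 2 <= INR n * S).
  { eapply Rle_trans; [apply rsum_sq_le|]. right. unfold S, nsq, vsub. f_equal.
    apply rsum_ext; intros; apply pow2_abs. }
  assert (Hcoord : forall i r, (i < I)%nat -> (r < ni i)%nat ->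
            vsub (Gv x) (Gv z) (off ni i + r)%nat ^ 2 <= B ^ 2 * (INR n * S)).
  { intros i r Hi Hr. unfold vsub, Gv. rewrite !asm_at by auto. unfold Fgrad.
    assert (Hk : (off ni i + r < n)%nat) by (pose proof (off_ntot I ni i Hi); unfold n; lia).
    pose proof (pd_lip i _ B x z Hi Hk Hx Hz (fun w Hw l Hl => HB i Hi w Hw _ l Hk Hl)) as Hl.
    rewrite <- (pow2_abs (_ - _)).
    apply Rle_trans with ((B * rsum n (fun l => Rabs (x l - z l))) ^ 2).
    - apply pow_incr. split; [apply Rabs_pos|exact Hl].
    - rewrite Rpow_mult_distr. apply Rmult_le_compat_l; [apply pow2_ge_0|exact HS]. }
  apply Rle_trans with (rsum n (fun _ => B ^ 2 * (INR n * S))).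
  - unfold nsq, n. rewrite !rsum_blocks. apply rsum_le; intros i Hi. apply rsum_le; intros r Hr.
    apply Hcoord; auto.
  - rewrite rsum_const. right. ring.
Qed.

Lemma nsq_lincomb n a b u v : nsq n (fun k => a * u k - b * v k) =
  a ^ 2 * nsq n u - 2 * a * b * ip n u v + b ^ 2 * nsq n v.
Proof. unfold nsq, ip. rewrite <- !rsum_scal, <- rsum_minus, <- rsum_plus. apply rsum_ext; intros; ring. Qed.

Definition grad_step (tau g : R) (y x : vec) : vec :=
  fun k => x k - g * (Gv x k + tau * (x k - y k)).

(* For g = tau / (tau^2 + L) the gradient step contracts squared distances by
   the factor 1 - g tau, by strong monotonicity of F_{tau,y} and the Lipschitz
   bound L on F. *)
Lemma grad_step_contraction tau g L y x z : 0 < g -> g * tau <= 1 ->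
  g * (tau ^ 2 + L) = tau -> inQ I ni Qi x -> inQ I ni Qi z ->
  nsq (ntot I ni) (vsub (Gv x) (Gv z)) <= L * nsq (ntot I ni) (vsub x z) ->
  nsq (ntot I ni) (vsub (grad_step tau g y x) (grad_step tau g y z))
    <= (1 - g * tau) * nsq (ntot I ni) (vsub x z).
Proof.
  intros Hg Hgt HgL Hx Hz HL. set (n := ntot I ni).
  replace (vsub (grad_step tau g y x) (grad_step tau g y z))
    with (fun k => (1 - g * tau) * vsub x z k - g * vsub (Gv x) (Gv z) k)
    by (extensionality k; unfold grad_step, vsub; ring).
  rewrite nsq_lincomb.
  replace (ip n (vsub x z) (vsub (Gv x) (Gv z))) with (ip n (vsub (Gv x) (Gv z)) (vsub x z))
    by (unfold ip; apply rsum_ext; intros; ring).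
  assert (0 <= 2 * (1 - g * tau) * g * ip n (vsub (Gv x) (Gv z)) (vsub x z))
    by (apply Rmult_le_pos; [apply Rmult_le_pos|apply Gv_monotone]; auto; lra).
  assert (g ^ 2 * nsq n (vsub (Gv x) (Gv z)) <= g ^ 2 * (L * nsq n (vsub x z)))
    by (apply Rmult_le_compat_l; [apply pow2_ge_0|auto]).
  assert (Hc : (1 - g * tau) ^ 2 + g ^ 2 * L = 1 - g * tau).
  { replace (g ^ 2 * L) with (g * (g * (tau ^ 2 + L)) - (g * tau) ^ 2) by ring.
    rewrite HgL. ring. }
  pose proof (f_equal (fun c => c * nsq n (vsub x z)) Hc) as E. cbv beta in E. lra.
Qed.

Lemma grad_step_fixed_VI tau g y x p : 0 < g -> inQ I ni Qi x ->
  isproj (ntot I ni) (inQ I ni Qi) (grad_step tau g y x) p ->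
  (forall k, (k < ntot I ni)%nat -> p k = x k) -> solves_VI tau y x.
Proof.
  intros Hg Hx [_ Hp] Hfix. split; auto. intros q Hq. specialize (Hp q Hq).
  assert (E : ip (ntot I ni) (vsub (grad_step tau g y x) p) (vsub q p)
              = - g * (ip (ntot I ni) (Gv x) (vsub q x)
                       + tau * ip (ntot I ni) (vsub x y) (vsub q x))).
  { unfold ip. rewrite <- rsum_scal, <- rsum_plus, <- rsum_scal. apply rsum_ext; intros k Hk.
    unfold grad_step, vsub. rewrite Hfix by auto. ring. }
  rewrite E in Hp. nra.
Qed.

(* Existence of a solution of VI(Q, F_{tau,y}) for tau > 0: Banach's theorem
   applied to the projected gradient map. *)
Lemma VI_exists tau y x0 : 0 < tau -> inQ I ni Qi x0 -> exists x, solves_VI tau y x.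
Proof.
  intros Htau Q0. set (n := ntot I ni).
  destruct Gv_lip as [L [HL0 HL]].
  set (g := tau / (tau ^ 2 + L)).
  assert (Hpos : 0 < tau ^ 2 + L) by (pose proof (pow_lt tau 2 Htau); lra).
  assert (Hg : 0 < g) by (unfold g; apply Rdiv_lt_0_compat; auto).
  assert (HgL : g * (tau ^ 2 + L) = tau) by (unfold g; field; lra).
  assert (Hgt : 0 < g * tau <= 1).
  { split; [apply Rmult_lt_0_compat; auto|].
    assert (0 <= g * L) by (apply Rmult_le_pos; lra).
    apply (Rmult_le_reg_r tau); auto. nra. }
  set (T := fun x => epsilon (inhabits x0)
                       (fun p => isproj n (inQ I ni Qi) (grad_step tau g y x) p)).
  assert (HCcv : forall u v t, inQ I ni Qi u -> inQ I ni Qi v -> 0 <= t <= 1 ->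
                   inQ I ni Qi (comb t u v)) by (intros; apply inQ_comb; auto).
  assert (HCcl : forall xs x, (forall m, inQ I ni Qi (xs m)) -> cvc n xs x -> supp n x ->
                   inQ I ni Qi x) by (intros; eapply inQ_closed_seq; eauto).
  assert (HTp : forall x, isproj n (inQ I ni Qi) (grad_step tau g y x) (T x))
    by (intros x; apply epsilon_spec, (proj_exists n _ HCcv HCcl _ x0 Q0)).
  destruct (banach n (inQ I ni Qi) T (1 - g * tau) x0 ltac:(lra) Q0) as [x [Qx Hfix]]; auto.
  - intros x; apply (HTp x).
  - intros x z Hx Hz. eapply Rle_trans; [apply (proj_nonexp n (inQ I ni Qi)); apply HTp|].
    apply (grad_step_contraction tau g L); auto; lra.
  - exists x. apply (grad_step_fixed_VI tau g y x (T x)); auto.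
Qed.

(* Comparison of two VI solutions: by monotonicity of F,
   tau <x - y, x - z> + sigma <z - y', z - x> <= 0. *)
Lemma VI_compare tau y x sigma y' z : solves_VI tau y x -> solves_VI sigma y' z ->
  tau * ip (ntot I ni) (vsub x y) (vsub x z) + sigma * ip (ntot I ni) (vsub z y') (vsub z x) <= 0.
Proof.
  intros [Hx Vx] [Hz Vz]. specialize (Vx z Hz). specialize (Vz x Hx).
  pose proof (Gv_monotone x z Hx Hz) as Hm.
  assert (E : ip (ntot I ni) (Gv x) (vsub z x) + ip (ntot I ni) (Gv z) (vsub x z)
              = - ip (ntot I ni) (vsub (Gv x) (Gv z)) (vsub x z))
    by (unfold ip, vsub; rewrite <- rsum_plus, <- rsum_opp; apply rsum_ext; intros; ring).
  assert (Ex : ip (ntot I ni) (vsub x y) (vsub z x) = - ip (ntot I ni) (vsub x y) (vsub x z))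
    by (unfold ip, vsub; rewrite <- rsum_opp; apply rsum_ext; intros; ring).
  assert (Ez : ip (ntot I ni) (vsub z y') (vsub x z) = - ip (ntot I ni) (vsub z y') (vsub z x))
    by (unfold ip, vsub; rewrite <- rsum_opp; apply rsum_ext; intros; ring).
  rewrite Ex in Vx. rewrite Ez in Vz. lra.
Qed.

(* F_{tau,y} is strongly monotone, so VI(Q, F_{tau,y}) has at most one solution. *)
Lemma VI_unique tau y x z : 0 < tau -> solves_VI tau y x -> solves_VI tau y z -> x = z.
Proof.
  intros Htau Vx Vz. pose proof (VI_compare tau y x tau y z Vx Vz) as H.
  assert (E : ip (ntot I ni) (vsub x y) (vsub x z) + ip (ntot I ni) (vsub z y) (vsub z x)
              = nsq (ntot I ni) (vsub x z))
    by (unfold ip, nsq, vsub; rewrite <- rsum_plus; apply rsum_ext; intros; ring).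
  assert (Hn : nsq (ntot I ni) (vsub x z) <= 0) by nra.
  extensionality k. destruct (Nat.lt_ge_cases k (ntot I ni)) as [Hk|Hk].
  - pose proof (coord_le_nsq _ (vsub x z) k Hk). pose proof (pow2_ge_0 (vsub x z k)).
    unfold vsub in *. nra.
  - rewrite (proj1 (proj1 Vx)), (proj1 (proj1 Vz)); auto.
Qed.

Lemma fejer tau a b p y0 : 0 < tau -> solves_VI tau b a -> solves_VI 0 y0 p ->
  nsq (ntot I ni) (vsub a p) + nsq (ntot I ni) (vsub a b) <= nsq (ntot I ni) (vsub b p).
Proof.
  intros Htau Va Vp. pose proof (VI_compare tau b a 0 y0 p Va Vp) as H.
  assert (HW : ip (ntot I ni) (vsub a b) (vsub a p) <= 0) by nra.
  assert (E : nsq (ntot I ni) (vsub b p)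
              = nsq (ntot I ni) (vsub a p) + nsq (ntot I ni) (vsub a b)
                - 2 * ip (ntot I ni) (vsub a b) (vsub a p))
    by (unfold nsq, ip, vsub; rewrite <- rsum_scal, <- rsum_plus, <- rsum_minus;
        apply rsum_ext; intros; ring).
  lra.
Qed.

Section ProximalPoint.
Variables (tau : R) (xs : nat -> vec) (xe y0 : vec).
Hypothesis Htau : 0 < tau.
Hypothesis Hstep : forall m, solves_VI tau (xs m) (xs (S m)).
Hypothesis Hxe : solves_VI 0 y0 xe.

Lemma prox_fejer p : solves_VI 0 y0 p -> forall m,
  nsq (ntot I ni) (vsub (xs (S m)) p) + nsq (ntot I ni) (vsub (xs (S m)) (xs m))
    <= nsq (ntot I ni) (vsub (xs m) p).
Proof. intros Vp m. apply (fejer tau _ _ p y0); auto. Qed.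

Lemma prox_dist_decr p : solves_VI 0 y0 p -> forall m,
  nsq (ntot I ni) (vsub (xs (S m)) p) <= nsq (ntot I ni) (vsub (xs m) p).
Proof.
  intros Vp m. pose proof (prox_fejer p Vp m).
  pose proof (nsq_nonneg (ntot I ni) (vsub (xs (S m)) (xs m))). lra.
Qed.

Lemma prox_bounded : exists M, forall m k, (k < ntot I ni)%nat -> Rabs (xs m k) <= M.
Proof.
  set (n := ntot I ni).
  exists (sqrt (nsq n (vsub (xs 0%nat) xe)) + rsum n (fun k => Rabs (xe k))).
  intros m k Hk. replace (xs m k) with (vsub (xs m) xe k + xe k) by (unfold vsub; ring).
  eapply Rle_trans; [apply Rabs_triang|]. apply Rplus_le_compat.
  - eapply Rle_trans; [apply (coord_abs_le n); auto|]. apply sqrt_le_1_alt.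
    apply (decr_le (fun m => nsq n (vsub (xs m) xe))); [|lia]. apply prox_dist_decr; auto.
  - apply (rsum_term_le n (fun k => Rabs (xe k))); auto. intros; apply Rabs_pos.
Qed.

Lemma prox_steps_vanish : Un_cv (fun m => nsq (ntot I ni) (vsub (xs (S m)) (xs m))) 0.
Proof.
  set (n := ntot I ni).
  destruct (decreasing_cv (fun m => nsq n (vsub (xs m) xe))) as [l Hl].
  - intros m; apply prox_dist_decr; auto.
  - exists 0. intros z [m ->]. unfold opp_seq. pose proof (nsq_nonneg n (vsub (xs m) xe)). lra.
  - apply (cv_squeeze _ _ (fun m => nsq n (vsub (xs m) xe) - nsq n (vsub (xs (S m)) xe))).
    + intros m. pose proof (prox_fejer xe Hxe m).
      pose proof (nsq_nonneg n (vsub (xs (S m)) (xs m))).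
      rewrite Rminus_0_r, Rabs_right by lra. fold n in H. lra.
    + replace 0 with (l - l) by ring. apply CV_minus; auto.
      apply (sub_cv S (fun m => nsq n (vsub (xs m) xe))); auto. intros m; lia.
Qed.

(* Every cluster point of the iterates solves VI(Q, F): pass to the limit in the
   VI of the proximal steps, using the Lipschitz continuity of F. *)
Lemma prox_cluster_VI phi xbar : increasing phi ->
  (forall m, inQ I ni Qi (xs m)) -> cvc (ntot I ni) (fun m => xs (phi m)) xbar ->
  inQ I ni Qi xbar -> solves_VI 0 y0 xbar.
Proof.
  intros Hphi QS Hc Qbar. set (n := ntot I ni).
  assert (Hc1 : cvc n (fun m => xs (S (phi m))) xbar).
  { apply nsq_cvc. apply (cv_squeeze _ _ (fun m => 2 * nsq n (vsub (xs (S (phi m))) (xs (phi m)))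
                                               + 2 * nsq n (vsub (xs (phi m)) xbar))).
    - intros m. rewrite Rminus_0_r, Rabs_right by (apply Rle_ge, nsq_nonneg).
      unfold nsq, vsub. rewrite <- !rsum_scal, <- rsum_plus. apply rsum_le; intros k _.
      pose proof (pow2_ge_0 (xs (S (phi m)) k + xbar k - 2 * xs (phi m) k)). nra.
    - replace 0 with (2 * 0 + 2 * 0) by ring.
      apply CV_plus; apply CV_mult; try apply cv_const.
      + apply (sub_cv phi (fun m => nsq n (vsub (xs (S m)) (xs m)))); auto.
        apply prox_steps_vanish.
      + apply cvc_nsq; auto. }
  destruct Gv_lip as [L [HL0 HL]].
  assert (HG : cvc n (fun m => Gv (xs (S (phi m)))) (Gv xbar)).
  { apply nsq_cvc. apply (cv_squeeze _ _ (fun m => L * nsq n (vsub (xs (S (phi m))) xbar))).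
    - intros m. rewrite Rminus_0_r, Rabs_right by (apply Rle_ge, nsq_nonneg). apply HL; auto.
    - replace 0 with (L * 0) by ring. apply CV_mult; [apply cv_const|apply cvc_nsq; auto]. }
  split; auto. intros q Hq. fold n.
  assert (Z : ip n (vsub xbar xbar) (vsub q xbar) = 0)
    by (unfold ip, vsub; apply rsum_zero; intros; ring).
  replace (ip n (Gv xbar) (vsub q xbar) + 0 * ip n (vsub xbar y0) (vsub q xbar))
    with (ip n (Gv xbar) (vsub q xbar) + tau * ip n (vsub xbar xbar) (vsub q xbar))
    by (rewrite Z; ring).
  apply (Rle_cv_lim (Un := fun _ => 0)
           (Vn := fun m => ip n (Gv (xs (S (phi m)))) (vsub q (xs (S (phi m))))
                           + tau * ip n (vsub (xs (S (phi m))) (xs (phi m))) (vsub q (xs (S (phi m)))))).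
  - intros m. apply (proj2 (Hstep (phi m)) q Hq).
  - apply cv_const.
  - apply CV_plus; [|apply CV_mult; [apply cv_const|]]; apply cv_ip;
      auto using cvc_vsub, cvc_const.
Qed.

Lemma prox_converges : (forall m, inQ I ni Qi (xs m)) ->
  exists xbar, solves_VI 0 y0 xbar /\ converges_to (ntot I ni) xs xbar.
Proof.
  intros QS. set (n := ntot I ni).
  destruct prox_bounded as [M HM].
  destruct (bolzano_weierstrass n xs M HM) as [phi [xbar [Hphi [Sbar Hc]]]].
  assert (Qbar : inQ I ni Qi xbar) by (apply (inQ_closed_seq I ni Qi (fun m => xs (phi m))); auto).
  assert (Vbar : solves_VI 0 y0 xbar) by (apply (prox_cluster_VI phi); auto).
  exists xbar. split; auto.
  (* the distance to xbar is nonincreasing and tends to 0 along phi *)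
  intros eps He. destruct (nsq_eventually_small n _ _ Hc (eps ^ 2)) as [N HN]; [nra|].
  exists (phi N). intros m Hm. apply vnorm_lt_iff; auto.
  eapply Rle_lt_trans; [|apply (HN N); lia].
  apply (decr_le (fun m => nsq n (vsub (xs m) xbar))); auto.
  intros j; apply prox_dist_decr; auto.
Qed.
End ProximalPoint.

Lemma fprox0 y : fprox ni f 0 y = f.
Proof. extensionality i; extensionality x; unfold fprox, Rdiv; ring. Qed.

Lemma regularized_NE_unique tau y x0 : 0 < tau -> inQ I ni Qi x0 ->
  exists! x, is_NE I ni Qi (fprox ni f tau y) x.
Proof.
  intros Htau Q0. destruct (VI_exists tau y x0 Htau Q0) as [x Vx].
  exists x. split; [apply VI_NE; auto; lra|].
  intros x' Hx'. apply (VI_unique tau y); auto. apply NE_VI; auto; lra.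
Qed.

Lemma proximal_point_NE tau (Stau : vec -> vec) x0 xe : 0 < tau ->
  is_NE I ni Qi f xe ->
  (forall y, supp (ntot I ni) y -> is_NE I ni Qi (fprox ni f tau y) (Stau y)) ->
  inQ I ni Qi x0 ->
  exists xl, is_NE I ni Qi f xl /\ converges_to (ntot I ni) (fun m => Nat.iter m Stau x0) xl.
Proof.
  intros Htau Hxe HS Hx0. set (xs := fun m => Nat.iter m Stau x0).
  assert (QS : forall m, inQ I ni Qi (xs m)).
  { induction m as [|m IH]; [exact Hx0|]. apply (HS (xs m) (proj1 IH)). }
  assert (Hstep : forall m, solves_VI tau (xs m) (xs (S m)))
    by (intros m; apply NE_VI; [lra|apply (HS (xs m) (proj1 (QS m)))]).
  assert (Vxe : solves_VI 0 x0 xe) by (apply NE_VI; [lra|rewrite fprox0; auto]).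
  destruct (prox_converges tau xs xe x0 Htau Hstep Vxe QS) as [xl [Vl Hl]].
  exists xl. split; auto. rewrite <- (fprox0 x0). apply VI_NE; auto; lra.
Qed.
End Game.

Theorem mainTheorem7
  (I : nat) (ni : nat -> nat) (Qi : nat -> vec -> Prop) (f : nat -> vec -> R)
  (* players' dimensions *)
  (Hni : forall i, (i < I)%nat -> (0 < ni i)%nat)
  (* Assumption 1: Q_i nonempty closed convex; f_i convex in x_i *)
  (HQne : forall i, (i < I)%nat -> nonemptyQ (ni i) (Qi i))
  (HQcl : forall i, (i < I)%nat -> closedQ (ni i) (Qi i))
  (HQcv : forall i, (i < I)%nat -> convexQ (ni i) (Qi i))
  (Hfcv : forall i, (i < I)%nat -> forall x, inQ I ni Qi x ->
     forall u v t, supp (ni i) u -> supp (ni i) v -> Qi i u -> Qi i v -> 0 <= t <= 1 ->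
       f i (upd ni x i (fun k => t * u k + (1 - t) * v k))
         <= t * f i (upd ni x i u) + (1 - t) * f i (upd ni x i v))
  (* Assumptions 1-2: f_i twice continuously differentiable (on an open set
     containing Q) with bounded first and second derivatives on Q *)
  (Hfreg : forall i, (i < I)%nat ->
     exists U, open_in (ntot I ni) U /\ (forall x, inQ I ni Qi x -> U x) /\
       C2_on (ntot I ni) U (f i))
  (Hfbd : forall i, (i < I)%nat -> exists B, forall x, inQ I ni Qi x ->
     forall k l, (k < ntot I ni)%nat -> (l < ntot I ni)%nat ->
       Rabs (pd (f i) x k) <= B /\ Rabs (pd (fun z => pd (f i) z k) x l) <= B)
  (* monotone NEP *)
  (Hmon : monotone_on I ni Qi (Fgrad ni f))
  (* nonempty set of Nash equilibria *)
  (HNE : exists xs, is_NE I ni Qi f xs)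
  (tau : R) (Htau : 0 < tau)
  (HP : forall y, supp (ntot I ni) y ->
     exists M, is_Upsilon I ni Qi (Ftau ni (Fgrad ni f) tau y) M /\ P_matrix I M) :
  (forall y, supp (ntot I ni) y ->
     exists! x, is_NE I ni Qi (fprox ni f tau y) x) /\
  (forall Stau : vec -> vec,
     (forall y, supp (ntot I ni) y -> is_NE I ni Qi (fprox ni f tau y) (Stau y)) ->
     forall x0, inQ I ni Qi x0 ->
       exists xs, is_NE I ni Qi f xs /\
         converges_to (ntot I ni) (fun m => Nat.iter m Stau x0) xs).
Proof.
  destruct HNE as [xe Hxe]. split.
  - intros y _.
    exact (regularized_NE_unique I ni Qi f HQcv HQcl Hfcv Hfreg Hfbd Hmon tau y xe Htau (proj1 Hxe)).
  - intros Stau HS x0 Hx0.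
    exact (proximal_point_NE I ni Qi f HQcv HQcl Hfcv Hfreg Hfbd Hmon tau Stau x0 xe Htau Hxe HS Hx0).
Qed.
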